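(* Let $G\subset\mathbb{R}^2$ be an open set with $0\in G$, let $c>0$, and let $F:G\to\mathbb{R}^2$ be a locally DC mapping such that $F(0)=0$ and $F'_+(0,(1,0))=(c,0)$. Let $S\subset G$ be an (s)-set. Then there exist $a>0$ and $b>0$ such that $$S^*\coloneqq F\big(S\cap((-\infty,a]\times\mathbb{R})\big)\cap((-\infty,b]\times\mathbb{R})$$ is an (s)-set.
   Context: A function on an open convex set is DC if it is the difference of two convex functions; a mapping is DC if all its components are DC; a mapping on an open set $G$ is locally DC if each point of $G$ has a convex open neighbourhood on which it is DC. $F'_+(x,v)=\lim_{t\to0+}(F(x+tv)-F(x))/t$ is the one-sided directional derivative. A function defined on a nonempty set $D\subset\mathbb{R}$ is DCR if it is the restriction of a DC function defined on $\mathbb{R}$. A nonempty closed set $S\subset\mathbb{R}^2$ is an (s)-set if there exists $r>0$ such that (a) $S\subset\bigcup_{i=1}^k\operatorname{graph} f_i$ for some DCR functions $f_i:[0,r]\to\mathbb{R}$ with $f_i(0)=(f_i)'_+(0)=0$, and (b) $S=\bigcup_{h\in H}\operatorname{graph} h$ for some family $H$ of continuous functions on $[0,r]$. *)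

From Stdlib Require Import Reals.
From Coquelicot Require Import Coquelicot.
Open Scope R_scope.

Definition pt2 := (R * R)%type.

Definition comb2 (l : R) (p q : pt2) : pt2 :=
  (l * fst p + (1 - l) * fst q, l * snd p + (1 - l) * snd q).

Definition convex_set2 (C : pt2 -> Prop) : Prop :=
  forall p q l, C p -> C q -> 0 <= l <= 1 -> C (comb2 l p q).

Definition convex_on2 (C : pt2 -> Prop) (f : pt2 -> R) : Prop :=
  forall p q l, C p -> C q -> 0 <= l <= 1 ->
    f (comb2 l p q) <= l * f p + (1 - l) * f q.

Definition DC_on2 (C : pt2 -> Prop) (f : pt2 -> R) : Prop :=
  exists g h : pt2 -> R, convex_on2 C g /\ convex_on2 C h /\
    forall p, C p -> f p = g p - h p.

Definition locally_DC (G : pt2 -> Prop) (F : pt2 -> pt2) : Prop :=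
  forall x, G x -> exists U : pt2 -> Prop,
    open U /\ convex_set2 U /\ U x /\ (forall p, U p -> G p) /\
    DC_on2 U (fun p => fst (F p)) /\ DC_on2 U (fun p => snd (F p)).

Definition dir_deriv2 (F : pt2 -> pt2) (x v w : pt2) : Prop :=
  filterlim (fun t => (fst (F (fst x + t * fst v, snd x + t * snd v)) - fst (F x)) / t)
            (at_right 0) (locally (fst w)) /\
  filterlim (fun t => (snd (F (fst x + t * fst v, snd x + t * snd v)) - snd (F x)) / t)
            (at_right 0) (locally (snd w)).

Definition convex_R (f : R -> R) : Prop :=
  forall x y l, 0 <= l <= 1 -> f (l * x + (1 - l) * y) <= l * f x + (1 - l) * f y.

Definition DC_R (f : R -> R) : Prop :=
  exists g h : R -> R, convex_R g /\ convex_R h /\ forall x, f x = g x - h x.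

Definition DCR_on (r : R) (f : R -> R) : Prop :=
  exists g : R -> R, DC_R g /\ forall x, 0 <= x <= r -> f x = g x.

Definition graph_on (r : R) (h : R -> R) (p : pt2) : Prop :=
  0 <= fst p <= r /\ snd p = h (fst p).

Definition continuous_on_I (r : R) (h : R -> R) : Prop :=
  forall x, 0 <= x <= r ->
    filterlim h (within (fun y => 0 <= y <= r) (locally x)) (locally (h x)).

Definition s_set (S : pt2 -> Prop) : Prop :=
  (exists p, S p) /\ closed S /\
  exists r, 0 < r /\
    (exists (k : nat) (f : nat -> R -> R),
        (forall i, (i < k)%nat ->
           DCR_on r (f i) /\ f i 0 = 0 /\
           filterlim (fun t => (f i t - f i 0) / t) (at_right 0) (locally 0)) /\
        (forall p, S p -> exists i, (i < k)%nat /\ graph_on r (f i) p)) /\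
    (exists H : (R -> R) -> Prop,
        (forall h, H h -> continuous_on_I r h) /\
        (forall p, S p <-> exists h, H h /\ graph_on r h p)).

(* Near 0, F = (F1, F2) is a difference of convex functions which are Lipschitz on a small
   square. Along each DC curve t |-> (t, f t) of S, with f(0) = f'(0) = 0, the function
   phi(t) = F1(t, f t) is DC with right derivative c at 0; on a short enough interval its slopes
   stay above c/2 while the slopes of its convex parts K1 + K2 vary by less than c/6, and this
   pinching makes the inverse psi of phi DC as well. Hence S* lies on the graphs of the DC
   functions F2(psi, f o psi), which vanish to first order at 0. A continuous curve h of S agrees
   at each point with one of the finitely many f, so F1(t, h t) still increases at rate c/2 and
   S* is also the union of the continuous graphs x |-> F2(psi_h x, h (psi_h x)). *)

From Stdlib Require Import Reals Lra Lia Psatz Classical ClassicalEpsilon.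
From Coquelicot Require Import Coquelicot.
Open Scope R_scope.

(** * Slopes and convexity on an interval *)

Definition slope (f : R -> R) (x y : R) : R := (f y - f x) / (y - x).

Definition convex_on_int (a b : R) (f : R -> R) : Prop :=
  forall x y l, a <= x <= b -> a <= y <= b -> 0 <= l <= 1 ->
    f (l * x + (1 - l) * y) <= l * f x + (1 - l) * f y.

Definition increasing_slopes_on (a b : R) (f : R -> R) : Prop :=
  forall x y z, a <= x -> x < y -> y < z -> z <= b ->
    (f y - f x) * (z - y) <= (f z - f y) * (y - x).

Definition lipschitz_on (a b : R) (f : R -> R) (L : R) : Prop :=
  forall x y, a <= x <= b -> a <= y <= b -> Rabs (f x - f y) <= L * Rabs (x - y).

Lemma Rdiv_le_of_cross (A B d1 d2 : R) :
  0 < d1 -> 0 < d2 -> A * d2 <= B * d1 -> A / d1 <= B / d2.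
Proof.
  intros h1 h2 h. apply Rmult_le_reg_r with (d1 * d2); [nra|].
  replace (A / d1 * (d1 * d2)) with (A * d2) by (field; lra).
  replace (B / d2 * (d1 * d2)) with (B * d1) by (field; lra). exact h.
Qed.

Lemma convex_on_int_increasing_slopes a b f :
  convex_on_int a b f -> increasing_slopes_on a b f.
Proof.
  intros H x y z hx hxy hyz hz.
  set (l := (z - y) / (z - x)).
  assert (hl : l * (z - x) = z - y) by (unfold l; field; lra).
  assert (hl0 : 0 <= l <= 1).
  { split.
    - unfold l; apply Rmult_le_pos; [lra | left; apply Rinv_0_lt_compat; lra].
    - apply Rmult_le_reg_r with (z - x); [lra|]. rewrite hl. lra. }
  assert (hy : y = l * x + (1 - l) * z) by nra.
  specialize (H x z l ltac:(lra) ltac:(lra) hl0). rewrite <- hy in H.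
  assert (H2 : f y * (z - x) <= (l * f x + (1 - l) * f z) * (z - x))
    by (apply Rmult_le_compat_r; lra).
  replace ((l * f x + (1 - l) * f z) * (z - x))
    with (f x * (l * (z - x)) + f z * ((1 - l) * (z - x))) in H2 by ring.
  replace ((1 - l) * (z - x)) with (y - x) in H2 by lra.
  rewrite hl in H2. nra.
Qed.

Lemma increasing_slopes_convex_on_int a b f :
  increasing_slopes_on a b f -> convex_on_int a b f.
Proof.
  assert (key : forall x y l, increasing_slopes_on a b f -> a <= x -> x < y -> y <= b ->
            0 < l < 1 -> f (l * x + (1 - l) * y) <= l * f x + (1 - l) * f y).
  { intros x y l H hx hxy hy hl.
    set (m := l * x + (1 - l) * y).
    specialize (H x m y hx ltac:(unfold m; nra) ltac:(unfold m; nra) hy).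
    replace (y - m) with (l * (y - x)) in H by (unfold m; ring).
    replace (m - x) with ((1 - l) * (y - x)) in H by (unfold m; ring).
    assert (((f m - f x) * l - (f y - f m) * (1 - l)) * (y - x) <= 0) by nra.
    assert ((f m - f x) * l - (f y - f m) * (1 - l) <= 0).
    { apply Rnot_lt_le. intros hpos.
      assert (0 < ((f m - f x) * l - (f y - f m) * (1 - l)) * (y - x))
        by (apply Rmult_lt_0_compat; lra).
      lra. }
    lra. }
  intros H x y l hx hy hl.
  destruct (Req_dec l 0) as [->|hl0].
  { replace (0 * x + (1 - 0) * y) with y by ring. lra. }
  destruct (Req_dec l 1) as [->|hl1].
  { replace (1 * x + (1 - 1) * y) with x by ring. lra. }
  destruct (Rtotal_order x y) as [hxy|[<-|hxy]].
  - apply (key x y l H); lra.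
  - replace (l * x + (1 - l) * x) with x by ring. lra.
  - replace (l * x + (1 - l) * y) with ((1 - l) * y + (1 - (1 - l)) * x) by ring.
    replace (l * f x + (1 - l) * f y) with ((1 - l) * f y + (1 - (1 - l)) * f x) by ring.
    apply (key y x (1 - l) H); lra.
Qed.

Lemma diff_eq_slope_mul f x y : x <> y -> f y - f x = slope f x y * (y - x).
Proof. intros h. unfold slope. field. lra. Qed.

Section Increasing_slopes.
Variables (a b : R) (f : R -> R).
Hypothesis Hf : increasing_slopes_on a b f.

Lemma slope_le_next x y z :
  a <= x -> x < y -> y < z -> z <= b -> slope f x y <= slope f y z.
Proof. intros. unfold slope. apply Rdiv_le_of_cross; try lra. apply Hf; lra. Qed.

Lemma slope_le_extend_right x y z :
  a <= x -> x < y -> y < z -> z <= b -> slope f x y <= slope f x z.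
Proof.
  intros hx h1 h2 hz. unfold slope. apply Rdiv_le_of_cross; try lra.
  specialize (Hf x y z hx h1 h2 hz). nra.
Qed.

Lemma slope_le_shrink_left x y z :
  a <= x -> x < y -> y < z -> z <= b -> slope f x z <= slope f y z.
Proof.
  intros hx h1 h2 hz. unfold slope. apply Rdiv_le_of_cross; try lra.
  specialize (Hf x y z hx h1 h2 hz). nra.
Qed.

Lemma slope_monotone x y x' y' :
  a <= x -> x < y -> x <= x' -> y <= y' -> x' < y' -> y' <= b ->
  slope f x y <= slope f x' y'.
Proof.
  intros hx h1 h2 h3 h4 h5.
  apply Rle_trans with (slope f x y').
  - destruct (Req_dec y y') as [->|h]; [lra|]. apply slope_le_extend_right; lra.
  - destruct (Req_dec x x') as [->|h]; [lra|]. apply slope_le_shrink_left; lra.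
Qed.

End Increasing_slopes.

Lemma lipschitz_of_slope_bound a b f L :
  (forall x y, a <= x -> x < y -> y <= b -> Rabs (slope f x y) <= L) -> lipschitz_on a b f L.
Proof.
  intros H x y hx hy.
  destruct (Rtotal_order x y) as [h|[<-|h]].
  - rewrite <- Rabs_Ropp, <- Rabs_Ropp with (x := x - y).
    replace (- (f x - f y)) with (f y - f x) by ring.
    replace (- (x - y)) with (y - x) by ring.
    rewrite (diff_eq_slope_mul f x y), Rabs_mult by lra.
    apply Rmult_le_compat_r; [apply Rabs_pos | apply H; lra].
  - rewrite !Rminus_diag, Rabs_R0. lra.
  - rewrite (diff_eq_slope_mul f y x), Rabs_mult by lra.
    apply Rmult_le_compat_r; [apply Rabs_pos | apply H; lra].
Qed.

Lemma slope_bound_of_lipschitz a b f L x y :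
  lipschitz_on a b f L -> a <= x -> x < y -> y <= b -> Rabs (slope f x y) <= L.
Proof.
  intros H hx hxy hy. specialize (H y x ltac:(lra) ltac:(lra)).
  unfold slope. rewrite Rabs_div, (Rabs_right (y - x)) in * by lra.
  apply Rmult_le_reg_r with (y - x); [lra|].
  replace (Rabs (f y - f x) / (y - x) * (y - x)) with (Rabs (f y - f x)) by (field; lra).
  lra.
Qed.

Lemma convex_R_increasing_slopes f a b : convex_R f -> increasing_slopes_on a b f.
Proof.
  intros H. apply convex_on_int_increasing_slopes. intros x y l _ _ hl. apply H; exact hl.
Qed.

Lemma convex_R_lipschitz_on f a b :
  convex_R f -> a <= b -> exists L, 0 <= L /\ lipschitz_on a b f L.
Proof.
  intros H hab.
  pose proof (convex_R_increasing_slopes f (a - 1) (b + 1) H) as HS.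
  exists (Rabs (slope f (a - 1) a) + Rabs (slope f b (b + 1))). split.
  { pose proof (Rabs_pos (slope f (a - 1) a)); pose proof (Rabs_pos (slope f b (b + 1))); lra. }
  apply lipschitz_of_slope_bound. intros x y hx hxy hy.
  assert (h1 : slope f (a - 1) a <= slope f x y) by (apply (slope_monotone _ _ _ HS); lra).
  assert (h2 : slope f x y <= slope f b (b + 1)) by (apply (slope_monotone _ _ _ HS); lra).
  split_Rabs; lra.
Qed.

Lemma lipschitz_of_bounded_increasing_slopes A B d M f :
  increasing_slopes_on A B f -> 0 < d -> 0 <= M ->
  (forall x, A <= x <= B -> Rabs (f x) <= M) -> lipschitz_on (A + d) (B - d) f (2 * M / d).
Proof.
  intros HS hd hM HB. apply lipschitz_of_slope_bound. intros x y hx hxy hy.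
  assert (hu : slope f x y <= slope f y B) by (apply (slope_le_next _ _ _ HS); lra).
  assert (hl : slope f A x <= slope f x y) by (apply (slope_le_next _ _ _ HS); lra).
  pose proof (HB A ltac:(lra)) as bA; pose proof (HB x ltac:(lra)) as bx.
  pose proof (HB y ltac:(lra)) as by_; pose proof (HB B ltac:(lra)) as bB.
  apply Rabs_le_between in bA, bx, by_, bB.
  assert (e1 : slope f y B <= 2 * M / d).
  { unfold slope. apply Rdiv_le_of_cross; [lra | lra | nra]. }
  assert (e2 : - (2 * M / d) <= slope f A x).
  { unfold slope. replace (- (2 * M / d)) with ((- (2 * M)) / d) by (field; lra).
    apply Rdiv_le_of_cross; [lra | lra | nra]. }
  apply Rabs_le_between. lra.
Qed.

Definition clamp (a b x : R) : R := Rmax a (Rmin x b).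

Lemma clamp_in a b x : a <= b -> a <= clamp a b x <= b.
Proof. intros h. unfold clamp, Rmax, Rmin. repeat destruct Rle_dec; lra. Qed.

Lemma clamp_id a b x : a <= x <= b -> clamp a b x = x.
Proof. intros h. unfold clamp, Rmax, Rmin. repeat destruct Rle_dec; lra. Qed.

Lemma clamp_dist a b x y :
  a <= y <= b -> Rabs (clamp a b x - y) + Rabs (x - clamp a b x) = Rabs (x - y).
Proof. intros h. unfold clamp, Rmax, Rmin. repeat destruct Rle_dec; split_Rabs; lra. Qed.

Lemma clamp_lipschitz a b x y : a <= b -> Rabs (clamp a b x - clamp a b y) <= Rabs (x - y).
Proof. intros h. unfold clamp, Rmax, Rmin. repeat destruct Rle_dec; split_Rabs; lra. Qed.

(* Outside [a, b] continue P by the cone of slope L; the Lipschitz bound keeps it convex. *)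
Lemma convex_R_extension a b P L :
  a <= b -> 0 <= L -> convex_on_int a b P -> lipschitz_on a b P L ->
  exists Q, convex_R Q /\ forall x, a <= x <= b -> Q x = P x.
Proof.
  intros hab hL HC HL.
  set (Q := fun x => P (clamp a b x) + L * Rabs (x - clamp a b x)).
  assert (cone : forall z y, a <= y <= b -> Q z <= P y + L * Rabs (z - y)).
  { intros z y hy. unfold Q. pose proof (clamp_in a b z hab) as hz.
    pose proof (HL (clamp a b z) y hz hy) as hP.
    pose proof (clamp_dist a b z y hy).
    pose proof (Rle_abs (P (clamp a b z) - P y)). nra. }
  exists Q. split.
  - intros x y l hl.
    set (cx := clamp a b x). set (cy := clamp a b y).
    pose proof (clamp_in a b x hab) as hx. pose proof (clamp_in a b y hab) as hy.
    fold cx in hx; fold cy in hy.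
    pose proof (cone (l * x + (1 - l) * y) (l * cx + (1 - l) * cy) ltac:(nra)) as K.
    pose proof (HC cx cy l hx hy hl) as C.
    assert (T : Rabs (l * x + (1 - l) * y - (l * cx + (1 - l) * cy))
                <= l * Rabs (x - cx) + (1 - l) * Rabs (y - cy)).
    { replace (l * x + (1 - l) * y - (l * cx + (1 - l) * cy))
        with (l * (x - cx) + (1 - l) * (y - cy)) by ring.
      eapply Rle_trans; [apply Rabs_triang|]. rewrite !Rabs_mult.
      rewrite (Rabs_pos_eq l), (Rabs_pos_eq (1 - l)) by lra. lra. }
    unfold Q at 2 3. fold cx cy. nra.
  - intros x hx. unfold Q. rewrite clamp_id, Rminus_diag, Rabs_R0 by exact hx. ring.
Qed.

Lemma convex_on_int_add a b f g :
  convex_on_int a b f -> convex_on_int a b g -> convex_on_int a b (fun x => f x + g x).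
Proof.
  intros H1 H2 x y l hx hy hl.
  pose proof (H1 x y l hx hy hl); pose proof (H2 x y l hx hy hl); lra.
Qed.

Lemma convex_on_int_scal a b f k :
  0 <= k -> convex_on_int a b f -> convex_on_int a b (fun x => k * f x).
Proof.
  intros hk H x y l hx hy hl. pose proof (H x y l hx hy hl) as Hl.
  apply Rmult_le_compat_l with (r := k) in Hl; [lra | exact hk].
Qed.

Lemma convex_on_int_restr a b a' b' f :
  a <= a' -> b' <= b -> convex_on_int a b f -> convex_on_int a' b' f.
Proof. intros h1 h2 H x y l hx hy hl. apply H; [lra | lra | exact hl]. Qed.

Lemma lipschitz_on_add a b f g L1 L2 :
  lipschitz_on a b f L1 -> lipschitz_on a b g L2 -> lipschitz_on a b (fun x => f x + g x) (L1 + L2).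
Proof.
  intros H1 H2 x y hx hy. pose proof (H1 x y hx hy); pose proof (H2 x y hx hy).
  replace (f x + g x - (f y + g y)) with ((f x - f y) + (g x - g y)) by ring.
  eapply Rle_trans; [apply Rabs_triang | lra].
Qed.

Lemma lipschitz_on_scal a b f k L :
  lipschitz_on a b f L -> lipschitz_on a b (fun x => k * f x) (Rabs k * L).
Proof.
  intros H x y hx hy.
  replace (k * f x - k * f y) with (k * (f x - f y)) by ring.
  rewrite Rabs_mult, Rmult_assoc. apply Rmult_le_compat_l; [apply Rabs_pos | auto].
Qed.

Lemma lipschitz_on_mono a b f L L' : L <= L' -> lipschitz_on a b f L -> lipschitz_on a b f L'.
Proof.
  intros h H x y hx hy. pose proof (H x y hx hy). pose proof (Rabs_pos (x - y)). nra.
Qed.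

Lemma lipschitz_on_ext a b f g L :
  (forall x, a <= x <= b -> f x = g x) -> lipschitz_on a b f L -> lipschitz_on a b g L.
Proof. intros E H x y hx hy. rewrite <- (E x hx), <- (E y hy). auto. Qed.

Lemma lipschitz_on_restr a b a' b' f L :
  a <= a' -> b' <= b -> lipschitz_on a b f L -> lipschitz_on a' b' f L.
Proof. intros h1 h2 H x y hx hy. apply H; lra. Qed.

Lemma lipschitz_on_comp a b u psi L K :
  0 <= L -> lipschitz_on 0 a u L -> lipschitz_on 0 b psi K ->
  (forall x, 0 <= x <= b -> 0 <= psi x <= a) -> lipschitz_on 0 b (fun x => u (psi x)) (L * K).
Proof.
  intros hL Hu Hpsi Hr x y hx hy. eapply Rle_trans; [apply Hu; auto|].
  rewrite Rmult_assoc. apply Rmult_le_compat_l; auto.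
Qed.

(* [kap] is the right derivative of [f] at 0, the infimum of the slopes [slope f 0 u]. *)
Lemma slopes_pinched_near_0 A f L :
  0 < A -> increasing_slopes_on 0 A f -> lipschitz_on 0 A f L ->
  forall eps, 0 < eps -> exists a kap, 0 < a <= A /\
    forall s t, 0 <= s -> s < t -> t <= a -> kap <= slope f s t <= kap + eps.
Proof.
  intros hA HS HL eps he.
  set (E := fun v => exists u, 0 < u <= A /\ v = - slope f 0 u).
  assert (hb : bound E).
  { exists L. intros v (u & hu & ->).
    pose proof (slope_bound_of_lipschitz 0 A f L 0 u HL ltac:(lra) ltac:(lra) ltac:(lra)) as B.
    apply Rabs_le_between in B. lra. }
  assert (hne : exists v, E v) by (exists (- slope f 0 A); exists A; split; [lra | auto]).
  destruct (completeness E hb hne) as [m [hub hlub]].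
  assert (low : forall u, 0 < u <= A -> - m <= slope f 0 u).
  { intros u hu. assert (hm : E (- slope f 0 u)) by (exists u; auto). apply hub in hm. lra. }
  assert (near : exists u0, 0 < u0 <= A /\ slope f 0 u0 <= - m + eps / 2).
  { apply NNPP. intros Hn.
    assert (hm : is_upper_bound E (m - eps / 2)).
    { intros v (u & hu & ->). apply Rnot_lt_le. intros hv.
      apply Hn. exists u. split; [auto | lra]. }
    apply hlub in hm. lra. }
  destruct near as (u0 & hu0 & hs0).
  exists (u0 / 2), (- m). split; [lra|].
  intros s t hs hst ht. split.
  - eapply Rle_trans; [apply (low t); lra|]. apply (slope_monotone _ _ _ HS); lra.
  - assert (slope f s t <= slope f (u0 / 2) u0) by (apply (slope_monotone _ _ _ HS); lra).
    assert (slope f (u0 / 2) u0 = 2 * slope f 0 u0 - slope f 0 (u0 / 2))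
      by (unfold slope; field; lra).
    pose proof (low (u0 / 2) ltac:(lra)). lra.
Qed.

(** * DC functions on an interval *)

(* The Lipschitz bounds on the convex parts make them extendable to all of R. *)
Definition DC_lip_on (a b : R) (f : R -> R) : Prop :=
  exists P Q L, 0 <= L /\ convex_on_int a b P /\ convex_on_int a b Q /\
    lipschitz_on a b P L /\ lipschitz_on a b Q L /\ forall x, a <= x <= b -> f x = P x - Q x.

Lemma DC_lip_on_DCR r f : 0 <= r -> DC_lip_on 0 r f -> DCR_on r f.
Proof.
  intros hr (P & Q & L & hL & CP & CQ & LP & LQ & E).
  destruct (convex_R_extension 0 r P L hr hL CP LP) as (P' & CP' & EP).
  destruct (convex_R_extension 0 r Q L hr hL CQ LQ) as (Q' & CQ' & EQ).
  exists (fun x => P' x - Q' x). split.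
  - exists P', Q'. auto.
  - intros x hx. rewrite E, EP, EQ by exact hx. reflexivity.
Qed.

Lemma DC_lip_on_restr a b a' b' f : a <= a' -> b' <= b -> DC_lip_on a b f -> DC_lip_on a' b' f.
Proof.
  intros h1 h2 (P & Q & L & hL & CP & CQ & LP & LQ & E).
  exists P, Q, L. repeat split; auto.
  - apply (convex_on_int_restr a b); auto.
  - apply (convex_on_int_restr a b); auto.
  - apply (lipschitz_on_restr a b); auto.
  - apply (lipschitz_on_restr a b); auto.
  - intros; apply E; lra.
Qed.

Lemma DC_lip_on_ext a b f g :
  (forall x, a <= x <= b -> f x = g x) -> DC_lip_on a b f -> DC_lip_on a b g.
Proof.
  intros E (P & Q & L & hL & CP & CQ & LP & LQ & E').
  exists P, Q, L. repeat split; auto. intros; rewrite <- E; auto.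
Qed.

Lemma DC_lip_on_sub a b f g :
  DC_lip_on a b f -> DC_lip_on a b g -> DC_lip_on a b (fun x => f x - g x).
Proof.
  intros (P1 & Q1 & L1 & hL1 & CP1 & CQ1 & LP1 & LQ1 & E1)
         (P2 & Q2 & L2 & hL2 & CP2 & CQ2 & LP2 & LQ2 & E2).
  exists (fun x => P1 x + Q2 x), (fun x => Q1 x + P2 x), (L1 + L2). repeat split.
  - lra.
  - apply convex_on_int_add; auto.
  - apply convex_on_int_add; auto.
  - apply lipschitz_on_add; auto.
  - apply lipschitz_on_add; auto.
  - intros x hx. rewrite E1, E2 by exact hx. ring.
Qed.

Lemma DC_lip_on_id a b : DC_lip_on a b (fun x => x).
Proof.
  exists (fun x => x), (fun _ => 0), 1. repeat split.
  - lra.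
  - intros x y l _ _ _; lra.
  - intros x y l _ _ _; lra.
  - intros x y _ _; lra.
  - intros x y _ _. rewrite Rminus_diag, Rabs_R0. pose proof (Rabs_pos (x - y)). lra.
  - intros; ring.
Qed.

Lemma DC_lip_on_DC_R a b f : a <= b -> DC_R f -> DC_lip_on a b f.
Proof.
  intros hab (g & h & Cg & Ch & E).
  assert (conv : forall k, convex_R k -> DC_lip_on a b k).
  { intros k Ck. destruct (convex_R_lipschitz_on k a b Ck hab) as (L & hL & HL).
    exists k, (fun _ => 0), L. repeat split; auto.
    - intros x y l _ _ hl. apply Ck; exact hl.
    - intros x y l _ _ _; lra.
    - intros x y _ _. rewrite Rminus_diag, Rabs_R0. pose proof (Rabs_pos (x - y)). nra.
    - intros; ring. }
  apply DC_lip_on_ext with (fun x => g x - h x); [intros; auto|].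
  apply DC_lip_on_sub; apply conv; auto.
Qed.

Lemma DCR_on_DC_lip_on r u : 0 <= r -> DCR_on r u -> DC_lip_on 0 r u.
Proof.
  intros hr (g & Dg & E). apply (DC_lip_on_ext 0 r g); [intros x hx; symmetry; auto|].
  apply DC_lip_on_DC_R; auto.
Qed.

Lemma DC_lip_on_lipschitz a b f : DC_lip_on a b f -> exists L, 0 <= L /\ lipschitz_on a b f L.
Proof.
  intros (P & Q & L & hL & CP & CQ & LP & LQ & E).
  exists (L + L). split; [lra|]. intros x y hx hy.
  rewrite !E by assumption.
  pose proof (LP x y hx hy); pose proof (LQ x y hx hy).
  replace (P x - Q x - (P y - Q y)) with ((P x - P y) - (Q x - Q y)) by ring.
  eapply Rle_trans; [apply Rabs_triang|]. rewrite Rabs_Ropp. lra.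
Qed.

(** * Convex functions on a square *)

Definition square (d : R) (p : pt2) : Prop := -d <= fst p <= d /\ -d <= snd p <= d.

Definition lipschitz2_on (D : pt2 -> Prop) (g : pt2 -> R) (L : R) : Prop :=
  forall p q, D p -> D q -> Rabs (g p - g q) <= L * (Rabs (fst p - fst q) + Rabs (snd p - snd q)).

Lemma square_convex d : convex_set2 (square d).
Proof. intros p q l [h1 h2] [h3 h4] hl. unfold comb2, square; simpl. split; nra. Qed.

Lemma square_mono d d' p : d' <= d -> square d' p -> square d p.
Proof. intros h [h1 h2]. split; lra. Qed.

Lemma open_square_nbhd (U : pt2 -> Prop) :
  open U -> U (0, 0) -> exists d, 0 < d /\ forall p, square d p -> U p.
Proof.
  intros HU h0. destruct (HU _ h0) as [eps Heps].
  exists (eps / 2). split; [destruct eps; simpl; lra|].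
  intros [x y] [h1 h2]. simpl in *. apply Heps. split.
  - change (Rabs (x - 0) < eps). rewrite Rminus_0_r. apply Rabs_def1; destruct eps; simpl in *; lra.
  - change (Rabs (y - 0) < eps). rewrite Rminus_0_r. apply Rabs_def1; destruct eps; simpl in *; lra.
Qed.

Lemma convex_on2_restr (U D : pt2 -> Prop) g :
  (forall p, D p -> U p) -> convex_on2 U g -> convex_on2 D g.
Proof. intros H C p q l hp hq hl. apply C; auto. Qed.

Lemma lipschitz2_on_mono D g L L' : L <= L' -> lipschitz2_on D g L -> lipschitz2_on D g L'.
Proof.
  intros h H p q hp hq. pose proof (H p q hp hq).
  pose proof (Rabs_pos (fst p - fst q)); pose proof (Rabs_pos (snd p - snd q)). nra.
Qed.

Lemma lipschitz2_on_vertical D G K t y y' :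
  lipschitz2_on D G K -> D (t, y) -> D (t, y') -> Rabs (G (t, y) - G (t, y')) <= K * Rabs (y - y').
Proof.
  intros HG h1 h2. pose proof (HG _ _ h1 h2) as H. simpl in H.
  rewrite Rminus_diag, Rabs_R0, Rplus_0_l in H. exact H.
Qed.

Lemma square_axis d t y : square d (t, y) -> square d (t, 0).
Proof. intros [h1 h2]. split; simpl in *; lra. Qed.

Section Convex_on_square.
Variables (U : pt2 -> Prop) (g : pt2 -> R) (d : R).
Hypotheses (Cg : convex_on2 U g) (hd : 0 < d) (HU : forall p, square d p -> U p).

Lemma convex_on2_line_x y x1 x2 l : -d <= x1 <= d -> -d <= x2 <= d -> -d <= y <= d -> 0 <= l <= 1 ->
  g (l * x1 + (1 - l) * x2, y) <= l * g (x1, y) + (1 - l) * g (x2, y).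
Proof.
  intros h1 h2 hy hl.
  pose proof (Cg (x1, y) (x2, y) l ltac:(apply HU; split; simpl; lra)
                ltac:(apply HU; split; simpl; lra) hl) as H.
  unfold comb2 in H; simpl in H. replace (l * y + (1 - l) * y) with y in H by ring. exact H.
Qed.

Lemma convex_on2_line_y x y1 y2 l : -d <= x <= d -> -d <= y1 <= d -> -d <= y2 <= d -> 0 <= l <= 1 ->
  g (x, l * y1 + (1 - l) * y2) <= l * g (x, y1) + (1 - l) * g (x, y2).
Proof.
  intros hx h1 h2 hl.
  pose proof (Cg (x, y1) (x, y2) l ltac:(apply HU; split; simpl; lra)
                ltac:(apply HU; split; simpl; lra) hl) as H.
  unfold comb2 in H; simpl in H. replace (l * x + (1 - l) * x) with x in H by ring. exact H.
Qed.

Lemma segment_comb v : -d <= v <= d -> exists l, 0 <= l <= 1 /\ v = l * (- d) + (1 - l) * d.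
Proof.
  intros hv. exists ((d - v) / (2 * d)). split.
  - split.
    + apply Rmult_le_pos; [lra | left; apply Rinv_0_lt_compat; lra].
    + apply Rmult_le_reg_r with (2 * d); [lra|]. field_simplify; lra.
  - field. lra.
Qed.

(* Above by the values at the corners; below by convexity through the centre. *)
Lemma convex_on2_square_bounded : exists M, 0 <= M /\ forall p, square d p -> Rabs (g p) <= M.
Proof.
  set (Mu := Rmax (Rmax (g (-d, -d)) (g (-d, d))) (Rmax (g (d, -d)) (g (d, d)))).
  assert (comb_le_max : forall A B l, 0 <= l <= 1 -> l * A + (1 - l) * B <= Rmax A B).
  { intros A B l hl. unfold Rmax; destruct Rle_dec; nra. }
  assert (up : forall x y, -d <= x <= d -> -d <= y <= d -> g (x, y) <= Mu).
  { intros x y hx hy.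
    destruct (segment_comb x hx) as (l & hl & ->).
    destruct (segment_comb y hy) as (l' & hl' & ->).
    assert (edge : forall xx, -d <= xx <= d ->
              g (xx, l' * (-d) + (1 - l') * d) <= Rmax (g (xx, -d)) (g (xx, d))).
    { intros xx hxx. eapply Rle_trans; [apply convex_on2_line_y; auto; lra|].
      apply comb_le_max; exact hl'. }
    eapply Rle_trans; [apply convex_on2_line_x; auto; nra|].
    eapply Rle_trans; [apply comb_le_max; exact hl|].
    pose proof (edge (-d) ltac:(lra)). pose proof (edge d ltac:(lra)).
    unfold Mu, Rmax in *; repeat destruct Rle_dec; lra. }
  assert (low : forall x y, -d <= x <= d -> -d <= y <= d -> 2 * g (0, 0) - Mu <= g (x, y)).
  { intros x y hx hy.
    pose proof (Cg (x, y) (-x, -y) (1/2) ltac:(apply HU; split; simpl; lra)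
                  ltac:(apply HU; split; simpl; lra) ltac:(lra)) as H.
    unfold comb2 in H; simpl in H.
    replace (1 / 2 * x + (1 - 1 / 2) * - x) with 0 in H by field.
    replace (1 / 2 * y + (1 - 1 / 2) * - y) with 0 in H by field.
    pose proof (up (-x) (-y) ltac:(lra) ltac:(lra)). lra. }
  exists (2 * Rabs Mu + 2 * Rabs (g (0, 0))). split.
  { pose proof (Rabs_pos Mu); pose proof (Rabs_pos (g (0, 0))); lra. }
  intros [x y] [hx hy]; simpl in hx, hy.
  pose proof (up x y hx hy). pose proof (low x y hx hy).
  assert (- Rabs Mu <= Mu <= Rabs Mu) by (split_Rabs; lra).
  assert (- Rabs (g (0, 0)) <= g (0, 0) <= Rabs (g (0, 0))) by (split_Rabs; lra).
  apply Rabs_le_between. lra.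
Qed.

Lemma convex_on2_lipschitz_half_square : exists L, 0 <= L /\ lipschitz2_on (square (d / 2)) g L.
Proof.
  destruct convex_on2_square_bounded as (M & hM & bnd).
  exists (2 * M / (d / 2)). split.
  { apply Rmult_le_pos; [lra | left; apply Rinv_0_lt_compat; lra]. }
  assert (LX : forall y, -d <= y <= d ->
            lipschitz_on (-d + d / 2) (d - d / 2) (fun x => g (x, y)) (2 * M / (d / 2))).
  { intros y hy. apply lipschitz_of_bounded_increasing_slopes; try lra.
    - apply convex_on_int_increasing_slopes. intros x1 x2 l h1 h2 hl.
      apply convex_on2_line_x; auto.
    - intros x hx. apply bnd. split; simpl; lra. }
  assert (LY : forall x, -d <= x <= d ->
            lipschitz_on (-d + d / 2) (d - d / 2) (fun y => g (x, y)) (2 * M / (d / 2))).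
  { intros x hx. apply lipschitz_of_bounded_increasing_slopes; try lra.
    - apply convex_on_int_increasing_slopes. intros y1 y2 l h1 h2 hl.
      apply convex_on2_line_y; auto.
    - intros y hy. apply bnd. split; simpl; lra. }
  intros [x1 y1] [x2 y2] [hx1 hy1] [hx2 hy2]; simpl in *.
  pose proof (LX y1 ltac:(lra) x1 x2 ltac:(lra) ltac:(lra)).
  pose proof (LY x2 ltac:(lra) y1 y2 ltac:(lra) ltac:(lra)). simpl in *.
  replace (g (x1, y1) - g (x2, y2))
    with ((g (x1, y1) - g (x2, y1)) + (g (x2, y1) - g (x2, y2))) by ring.
  eapply Rle_trans; [apply Rabs_triang | lra].
Qed.

End Convex_on_square.

(** * Composition with DC functions of two variables *)

Definition DC_lip2_on (D : pt2 -> Prop) (F : pt2 -> R) (L : R) : Prop :=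
  exists g h, convex_on2 D g /\ convex_on2 D h /\ lipschitz2_on D g L /\ lipschitz2_on D h L /\
    forall p, D p -> F p = g p - h p.

Lemma DC_lip2_on_lipschitz D F L : DC_lip2_on D F L -> lipschitz2_on D F (2 * L).
Proof.
  intros (g & h & _ & _ & Lg & Lh & E) p q hp hq. rewrite !E by assumption.
  pose proof (Lg p q hp hq). pose proof (Lh p q hp hq).
  replace (g p - h p - (g q - h q)) with ((g p - g q) - (h p - h q)) by ring.
  eapply Rle_trans; [apply Rabs_triang|]. rewrite Rabs_Ropp. lra.
Qed.

Section DC_composition.
Variables (D : pt2 -> Prop) (g : pt2 -> R) (Lg a b : R).
Hypotheses (HD : convex_set2 D) (Cg : convex_on2 D g) (LLg : lipschitz2_on D g Lg) (hLg : 0 <= Lg).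

(* The Lipschitz bound of [g] absorbs the concavity defects of [P1 - Q1] and [P2 - Q2]. *)
Lemma convex_on_int_comp_DC P1 Q1 P2 Q2 :
  convex_on_int a b P1 -> convex_on_int a b Q1 -> convex_on_int a b P2 -> convex_on_int a b Q2 ->
  (forall t, a <= t <= b -> D (P1 t - Q1 t, P2 t - Q2 t)) ->
  convex_on_int a b (fun t => g (P1 t - Q1 t, P2 t - Q2 t) + Lg * (P1 t + Q1 t + P2 t + Q2 t)).
Proof.
  intros C1 C2 C3 C4 HU x y l hx hy hl.
  assert (hw : a <= l * x + (1 - l) * y <= b) by nra.
  set (w := l * x + (1 - l) * y) in *.
  set (ux := (P1 x - Q1 x, P2 x - Q2 x)). set (uy := (P1 y - Q1 y, P2 y - Q2 y)).
  set (uw := (P1 w - Q1 w, P2 w - Q2 w)).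
  assert (Dx : D ux) by (apply HU; auto). assert (Dy : D uy) by (apply HU; auto).
  assert (Dw : D uw) by (apply HU; auto).
  pose proof (LLg uw (comb2 l ux uy) Dw (HD ux uy l Dx Dy hl)) as L1.
  pose proof (Cg ux uy l Dx Dy hl) as G1.
  pose proof (C1 x y l hx hy hl) as c1. pose proof (C2 x y l hx hy hl) as c2.
  pose proof (C3 x y l hx hy hl) as c3. pose proof (C4 x y l hx hy hl) as c4.
  fold w in c1, c2, c3, c4.
  unfold comb2, uw, ux, uy in L1, G1; simpl in L1, G1.
  assert (R1 : Rabs (P1 w - Q1 w - (l * (P1 x - Q1 x) + (1 - l) * (P1 y - Q1 y))) <=
     (l * P1 x + (1 - l) * P1 y - P1 w) + (l * Q1 x + (1 - l) * Q1 y - Q1 w))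
    by (apply Rabs_le_between; lra).
  assert (R2 : Rabs (P2 w - Q2 w - (l * (P2 x - Q2 x) + (1 - l) * (P2 y - Q2 y))) <=
     (l * P2 x + (1 - l) * P2 y - P2 w) + (l * Q2 x + (1 - l) * Q2 y - Q2 w))
    by (apply Rabs_le_between; lra).
  pose proof (Rmult_le_compat_l Lg _ _ hLg (Rplus_le_compat _ _ _ _ R1 R2)).
  pose proof (Rle_abs (g uw - g (comb2 l ux uy))) as A.
  unfold comb2, uw, ux, uy in A; simpl in A.
  unfold ux, uy, uw. lra.
Qed.

Lemma DC_lip_on_comp_convex u1 u2 :
  DC_lip_on a b u1 -> DC_lip_on a b u2 -> (forall t, a <= t <= b -> D (u1 t, u2 t)) ->
  DC_lip_on a b (fun t => g (u1 t, u2 t)).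
Proof.
  intros (P1 & Q1 & L1 & hL1 & CP1 & CQ1 & LP1 & LQ1 & E1)
         (P2 & Q2 & L2 & hL2 & CP2 & CQ2 & LP2 & LQ2 & E2) HU.
  assert (HU' : forall t, a <= t <= b -> D (P1 t - Q1 t, P2 t - Q2 t)).
  { intros t ht. rewrite <- E1, <- E2 by exact ht. auto. }
  set (LL := Lg * (L1 + L1 + (L2 + L2))).
  assert (hLL : 0 <= LL) by (unfold LL; apply Rmult_le_pos; lra).
  assert (LS : lipschitz_on a b (fun t => Lg * (P1 t + Q1 t + P2 t + Q2 t)) LL).
  { apply lipschitz_on_mono with (Rabs Lg * (L1 + L1 + (L2 + L2))).
    { unfold LL. rewrite Rabs_pos_eq by exact hLg. lra. }
    apply lipschitz_on_scal.
    apply lipschitz_on_ext with (fun t => (P1 t + Q1 t) + (P2 t + Q2 t)); [intros; ring|].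
    apply lipschitz_on_add; apply lipschitz_on_add; auto. }
  assert (LG : lipschitz_on a b (fun t => g (P1 t - Q1 t, P2 t - Q2 t)) LL).
  { intros x y hx hy. eapply Rle_trans; [apply LLg; auto|]. simpl.
    unfold LL. rewrite Rmult_assoc. apply Rmult_le_compat_l; [exact hLg|].
    pose proof (LP1 x y hx hy); pose proof (LQ1 x y hx hy).
    pose proof (LP2 x y hx hy); pose proof (LQ2 x y hx hy).
    assert (split4 : forall p q p' q', Rabs (p - q - (p' - q')) <= Rabs (p - p') + Rabs (q - q')).
    { intros. replace (p - q - (p' - q')) with ((p - p') - (q - q')) by ring.
      eapply Rle_trans; [apply Rabs_triang|]. rewrite Rabs_Ropp. lra. }
    pose proof (split4 (P1 x) (Q1 x) (P1 y) (Q1 y)).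
    pose proof (split4 (P2 x) (Q2 x) (P2 y) (Q2 y)). lra. }
  exists (fun t => g (P1 t - Q1 t, P2 t - Q2 t) + Lg * (P1 t + Q1 t + P2 t + Q2 t)),
    (fun t => Lg * (P1 t + Q1 t + P2 t + Q2 t)), (LL + LL). repeat split.
  - lra.
  - apply convex_on_int_comp_DC; auto.
  - apply convex_on_int_scal; [exact hLg|].
    repeat apply convex_on_int_add; auto.
  - apply lipschitz_on_add; auto.
  - apply lipschitz_on_mono with LL; [lra | exact LS].
  - intros t ht. rewrite E1, E2 by exact ht. ring.
Qed.

End DC_composition.

Lemma DC_lip_on_comp D F L a b u1 u2 :
  convex_set2 D -> DC_lip2_on D F L -> 0 <= L ->
  DC_lip_on a b u1 -> DC_lip_on a b u2 -> (forall t, a <= t <= b -> D (u1 t, u2 t)) ->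
  DC_lip_on a b (fun t => F (u1 t, u2 t)).
Proof.
  intros HD (g & h & Cg & Ch & Lg & Lh & E) hL D1 D2 HU.
  apply DC_lip_on_ext with (fun t => g (u1 t, u2 t) - h (u1 t, u2 t)).
  { intros t ht. rewrite E; auto. }
  apply DC_lip_on_sub; apply (DC_lip_on_comp_convex D _ L); auto.
Qed.

Lemma DC_lip_on_comp_1D a b u psi :
  DC_lip_on 0 a u -> DC_lip_on 0 b psi -> (forall x, 0 <= x <= b -> 0 <= psi x <= a) ->
  DC_lip_on 0 b (fun x => u (psi x)).
Proof.
  intros (P & Q & L & hL & CP & CQ & LP & LQ & E) Dpsi Hr.
  set (strip := fun p : pt2 => 0 <= fst p <= a).
  assert (cS : convex_set2 strip).
  { intros p q l hp hq hl. unfold strip, comb2 in *; simpl. nra. }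
  apply (DC_lip_on_ext 0 b (fun x => P (psi x) - Q (psi x))); [intros x hx; rewrite E; auto|].
  apply (DC_lip_on_comp strip (fun p => P (fst p) - Q (fst p)) L 0 b psi psi cS);
    try assumption.
  exists (fun p => P (fst p)), (fun p => Q (fst p)). repeat split.
  - intros p q l hp hq hl. apply CP; auto.
  - intros p q l hp hq hl. apply CQ; auto.
  - intros p q hp hq. pose proof (LP _ _ hp hq). pose proof (Rabs_pos (snd p - snd q)). nra.
  - intros p q hp hq. pose proof (LQ _ _ hp hq). pose proof (Rabs_pos (snd p - snd q)). nra.
Qed.

Lemma DC_lip2_on_mono D D' f L L' :
  (forall p, D' p -> D p) -> L <= L' -> DC_lip2_on D f L -> DC_lip2_on D' f L'.
Proof.
  intros HD hL (g & h & Cg & Ch & Lg & Lh & E).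
  exists g, h. repeat split.
  - apply (convex_on2_restr D); auto.
  - apply (convex_on2_restr D); auto.
  - intros p q hp hq. apply (lipschitz2_on_mono D g L L' hL Lg); auto.
  - intros p q hp hq. apply (lipschitz2_on_mono D h L L' hL Lh); auto.
  - intros p hp. apply E; auto.
Qed.

Lemma DC_on2_lipschitz_near_0 U f :
  open U -> U (0, 0) -> DC_on2 U f -> exists d L, 0 < d /\ 0 <= L /\ DC_lip2_on (square d) f L.
Proof.
  intros oU U0 (g & h & Cg & Ch & E).
  destruct (open_square_nbhd U oU U0) as (d & hd & Hsq).
  destruct (convex_on2_lipschitz_half_square U g d Cg hd Hsq) as (Lg & hLg & LLg).
  destruct (convex_on2_lipschitz_half_square U h d Ch hd Hsq) as (Lh & hLh & LLh).
  assert (sub : forall p, square (d / 2) p -> U p)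
    by (intros p hp; apply Hsq, (square_mono d (d / 2)); [lra | exact hp]).
  exists (d / 2), (Lg + Lh). split; [lra|]. split; [lra|].
  exists g, h. repeat split.
  - apply (convex_on2_restr U); auto.
  - apply (convex_on2_restr U); auto.
  - apply (lipschitz2_on_mono _ _ Lg); [lra | exact LLg].
  - apply (lipschitz2_on_mono _ _ Lh); [lra | exact LLh].
  - intros p hp. apply E, sub, hp.
Qed.

Lemma locally_DC_near_0 G F : G (0, 0) -> locally_DC G F ->
  exists d L, 0 < d /\ 0 <= L /\
    DC_lip2_on (square d) (fun p => fst (F p)) L /\ DC_lip2_on (square d) (fun p => snd (F p)) L.
Proof.
  intros G0 HDC. destruct (HDC (0, 0) G0) as (U & oU & _ & U0 & _ & D1 & D2).
  destruct (DC_on2_lipschitz_near_0 U _ oU U0 D1) as (d1 & L1 & hd1 & hL1 & E1).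
  destruct (DC_on2_lipschitz_near_0 U _ oU U0 D2) as (d2 & L2 & hd2 & hL2 & E2).
  exists (Rmin d1 d2), (L1 + L2). split; [apply Rmin_glb_lt; lra|]. split; [lra|].
  split.
  - apply (DC_lip2_on_mono (square d1) _ _ L1); [|lra | exact E1].
    intros p. apply square_mono, Rmin_l.
  - apply (DC_lip2_on_mono (square d2) _ _ L2); [|lra | exact E2].
    intros p. apply square_mono, Rmin_r.
Qed.

(** * Inverses of pinched DC functions *)

Definition increasing_rate_on (phi : R -> R) (a m : R) : Prop :=
  forall s t, 0 <= s -> s < t -> t <= a -> m * (t - s) <= phi t - phi s.

Lemma inverse_increasing_lipschitz a b m phi psi :
  0 < m -> increasing_rate_on phi a m ->
  (forall x, 0 <= x <= b -> 0 <= psi x <= a /\ phi (psi x) = x) ->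
  (forall x y, 0 <= x -> x < y -> y <= b -> psi x < psi y) /\ lipschitz_on 0 b psi (/ m).
Proof.
  intros hm Hinc Hpsi.
  assert (psi_inc : forall x y, 0 <= x -> x < y -> y <= b -> psi x < psi y).
  { intros x y hx hxy hy.
    destruct (Hpsi x ltac:(lra)) as [hx1 hx2]. destruct (Hpsi y ltac:(lra)) as [hy1 hy2].
    apply Rnot_le_lt. intros hle. destruct (Req_dec (psi x) (psi y)) as [e|ne].
    - rewrite e in hx2. lra.
    - pose proof (Hinc (psi y) (psi x) ltac:(lra) ltac:(lra) ltac:(lra)). nra. }
  split; [exact psi_inc|].
  apply lipschitz_of_slope_bound. intros x y hx hxy hy.
  pose proof (psi_inc x y hx hxy hy) as hlt.
  destruct (Hpsi x ltac:(lra)) as [hx1 hx2]. destruct (Hpsi y ltac:(lra)) as [hy1 hy2].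
  pose proof (Hinc (psi x) (psi y) ltac:(lra) hlt ltac:(lra)) as H. rewrite hx2, hy2 in H.
  unfold slope. rewrite Rabs_pos_eq.
  - apply Rmult_le_reg_r with (y - x); [lra|].
    replace ((psi y - psi x) / (y - x) * (y - x)) with (psi y - psi x) by (field; lra).
    apply Rmult_le_reg_l with m; [lra|].
    replace (m * (/ m * (y - x))) with (y - x) by (field; lra). lra.
  - apply Rmult_le_pos; [lra | left; apply Rinv_0_lt_compat; lra].
Qed.

Definition pinched_DC (phi : R -> R) (a m e : R) : Prop :=
  exists K1 K2 L kap, 0 <= L /\ convex_on_int 0 a K1 /\ convex_on_int 0 a K2 /\
    lipschitz_on 0 a K1 L /\ lipschitz_on 0 a K2 L /\
    (forall t, 0 <= t <= a -> phi t = K1 t - K2 t) /\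
    (forall s t, 0 <= s -> s < t -> t <= a -> m <= slope phi s t) /\
    (forall s t, 0 <= s -> s < t -> t <= a -> kap <= slope K1 s t + slope K2 s t <= kap + e).

Lemma pinched_DC_restr phi a a' m e : a' <= a -> pinched_DC phi a m e -> pinched_DC phi a' m e.
Proof.
  intros ha (K1 & K2 & L & kap & hL & C1 & C2 & L1 & L2 & E & Sl & Sw).
  exists K1, K2, L, kap.
  refine (conj hL (conj _ (conj _ (conj _ (conj _ (conj _ (conj _ _))))))).
  - apply (convex_on_int_restr 0 a); auto; lra.
  - apply (convex_on_int_restr 0 a); auto; lra.
  - apply (lipschitz_on_restr 0 a); auto; lra.
  - apply (lipschitz_on_restr 0 a); auto; lra.
  - intros t ht. apply E. lra.
  - intros s t hs hst ht. apply Sl; lra.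
  - intros s t hs hst ht. apply Sw; lra.
Qed.

Lemma pinched_DC_increasing phi a m e : pinched_DC phi a m e -> increasing_rate_on phi a m.
Proof.
  intros (K1 & K2 & L & kap & _ & _ & _ & _ & _ & _ & Sl & _) s t hs hst ht.
  rewrite (diff_eq_slope_mul phi s t) by lra. apply Rmult_le_compat_r; [lra | auto].
Qed.

(* [p, q] are the slopes of [K1, K2] on a first interval, [p + dp, q + dq] on a later one. *)
Lemma pinched_ratio_le C m e kap p q dp dq sg :
  0 < m -> e <= m / 2 -> C * m = 2 -> m <= p - q -> 0 <= dp -> 0 <= dq ->
  0 <= p + q - kap <= e -> 0 <= p + dp + q + dq - kap <= e -> (sg = 1 \/ sg = -1) ->
  (C * (p + q - kap) + sg) * (p + dp - (q + dq)) <= (C * (p + dp + q + dq - kap) + sg) * (p - q).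
Proof.
  intros hm he hC hpq hdp hdq h1 h2 hsg.
  assert (B1 : (p + q - kap) * (dp - dq) <= e * (dp + dq)) by nra.
  assert (B2 : 1 <= C * (m - e)) by nra.
  assert (B3 : (dp + dq) * m <= (dp + dq) * (p - q)) by nra.
  assert (B4 : sg * (dp - dq) <= dp + dq) by (destruct hsg as [-> | ->]; lra).
  assert (C * ((dp + dq) * (m - e)) <= C * ((dp + dq) * (p - q) - (p + q - kap) * (dp - dq)))
    by (apply Rmult_le_compat_l; nra).
  nra.
Qed.

Section Pinched_inverse.
Variables (a b m e kap : R) (K1 K2 psi : R -> R).
Hypotheses (hm : 0 < m) (he : e <= m / 2)
  (C1 : convex_on_int 0 a K1) (C2 : convex_on_int 0 a K2)
  (Sl : forall s t, 0 <= s -> s < t -> t <= a -> m <= slope K1 s t - slope K2 s t)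
  (Sw : forall s t, 0 <= s -> s < t -> t <= a -> kap <= slope K1 s t + slope K2 s t <= kap + e)
  (Hpsi : forall x, 0 <= x <= b -> 0 <= psi x <= a /\ K1 (psi x) - K2 (psi x) = x)
  (psi_inc : forall x y, 0 <= x -> x < y -> y <= b -> psi x < psi y).

(* In terms of the slopes [p, q] of [K1, K2] between consecutive values of [psi], the slopes of
   this function are [(2/m (p + q - kap) + sg) / (p - q)], which increase by [pinched_ratio_le]. *)
Lemma pinched_inverse_part_convex sg : (sg = 1 \/ sg = -1) ->
  convex_on_int 0 b (fun x => 2 / m * (K1 (psi x) + K2 (psi x) - kap * psi x) + sg * psi x).
Proof.
  intros hsg. apply increasing_slopes_convex_on_int. intros x y z hx hxy hyz hz.
  pose proof (psi_inc x y hx hxy ltac:(lra)). pose proof (psi_inc y z ltac:(lra) hyz hz).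
  destruct (Hpsi x ltac:(lra)) as [hs ex]. destruct (Hpsi y ltac:(lra)) as [ht ey].
  destruct (Hpsi z ltac:(lra)) as [hv ez].
  set (s := psi x) in *. set (t := psi y) in *. set (v := psi z) in *.
  set (C := 2 / m). assert (hC : C * m = 2) by (unfold C; field; lra).
  assert (dy : y - x = (slope K1 s t - slope K2 s t) * (t - s))
    by (rewrite <- ex, <- ey; unfold slope; field; lra).
  assert (dz : z - y = (slope K1 t v - slope K2 t v) * (v - t))
    by (rewrite <- ey, <- ez; unfold slope; field; lra).
  replace (C * (K1 t + K2 t - kap * t) + sg * t - (C * (K1 s + K2 s - kap * s) + sg * s))
    with ((C * (slope K1 s t + slope K2 s t - kap) + sg) * (t - s)) by (unfold slope; field; lra).
  replace (C * (K1 v + K2 v - kap * v) + sg * v - (C * (K1 t + K2 t - kap * t) + sg * t))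
    with ((C * (slope K1 t v + slope K2 t v - kap) + sg) * (v - t)) by (unfold slope; field; lra).
  rewrite dy, dz.
  pose proof (Sw s t ltac:(lra) ltac:(lra) ltac:(lra)).
  pose proof (Sw t v ltac:(lra) ltac:(lra) ltac:(lra)).
  pose proof (Sl s t ltac:(lra) ltac:(lra) ltac:(lra)).
  pose proof (slope_le_next 0 a K1 (convex_on_int_increasing_slopes _ _ _ C1) s t v
                ltac:(lra) ltac:(lra) ltac:(lra) ltac:(lra)).
  pose proof (slope_le_next 0 a K2 (convex_on_int_increasing_slopes _ _ _ C2) s t v
                ltac:(lra) ltac:(lra) ltac:(lra) ltac:(lra)).
  pose proof (pinched_ratio_le C m e kap (slope K1 s t) (slope K2 s t)
                (slope K1 t v - slope K1 s t) (slope K2 t v - slope K2 s t) sg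
                hm he hC ltac:(lra) ltac:(lra) ltac:(lra) ltac:(lra) ltac:(lra) hsg) as R.
  replace (slope K1 s t + (slope K1 t v - slope K1 s t)) with (slope K1 t v) in R by ring.
  replace (slope K2 s t + (slope K2 t v - slope K2 s t)) with (slope K2 t v) in R by ring.
  replace (slope K1 t v + slope K2 s t + (slope K2 t v - slope K2 s t))
    with (slope K1 t v + slope K2 t v) in R by ring.
  pose proof (Rmult_le_compat_r ((t - s) * (v - t)) _ _ ltac:(nra) R). nra.
Qed.

End Pinched_inverse.

(* [psi = ((w + psi) - (w - psi)) / 2] with [w = 2/m (K1 + K2 - kap id) o psi]. *)
Lemma pinched_DC_inverse a b m e phi psi :
  0 < m -> e <= m / 2 -> pinched_DC phi a m e ->
  (forall x, 0 <= x <= b -> 0 <= psi x <= a /\ phi (psi x) = x) -> DC_lip_on 0 b psi.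
Proof.
  intros hm he Hp Hpsi.
  pose proof (pinched_DC_increasing phi a m e Hp) as Hinc.
  destruct Hp as (K1 & K2 & L & kap & hL & C1 & C2 & L1 & L2 & E & Sl & Sw).
  destruct (inverse_increasing_lipschitz a b m phi psi hm Hinc Hpsi) as [psi_inc psi_lip].
  assert (Hr : forall x, 0 <= x <= b -> 0 <= psi x <= a) by (intros x hx; apply Hpsi; exact hx).
  assert (conv : forall sg, (sg = 1 \/ sg = -1) ->
            convex_on_int 0 b
              (fun x => 2 / m * (K1 (psi x) + K2 (psi x) - kap * psi x) + sg * psi x)).
  { apply (pinched_inverse_part_convex a b m e kap K1 K2 psi hm he C1 C2).
    - intros s t hs hst ht. replace (slope K1 s t - slope K2 s t) with (slope phi s t).
      + apply Sl; assumption.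
      + unfold slope. rewrite !E by lra. field. lra.
    - exact Sw.
    - intros x hx. destruct (Hpsi x hx) as [h1 h2]. rewrite <- E by exact h1. auto.
    - exact psi_inc. }
  set (w := fun x => 2 / m * (K1 (psi x) + K2 (psi x) - kap * psi x)).
  set (LW := Rabs (2 / m) * (L * / m + L * / m + Rabs (- kap) * / m)).
  assert (w_lip : lipschitz_on 0 b w LW).
  { apply lipschitz_on_scal.
    apply lipschitz_on_ext with (fun x => K1 (psi x) + K2 (psi x) + (- kap) * psi x);
      [intros; ring|].
    repeat apply lipschitz_on_add; [| | apply lipschitz_on_scal; exact psi_lip];
      apply (lipschitz_on_comp a); auto. }
  assert (hLW : 0 <= LW).
  { unfold LW. pose proof (Rinv_0_lt_compat m hm). pose proof (Rabs_pos (2 / m)).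
    pose proof (Rabs_pos (- kap)). apply Rmult_le_pos; [lra|]. nra. }
  assert (sg_lip : forall sg, Rabs sg = 1 -> lipschitz_on 0 b (fun x => sg * psi x) (/ m)).
  { intros sg hsg. rewrite <- (Rmult_1_l (/ m)), <- hsg. apply lipschitz_on_scal. exact psi_lip. }
  exists (fun x => / 2 * (w x + 1 * psi x)), (fun x => / 2 * (w x + -1 * psi x)),
    (Rabs (/ 2) * (LW + / m)).
  repeat split.
  - pose proof (Rabs_pos (/ 2)). pose proof (Rinv_0_lt_compat m hm). nra.
  - apply convex_on_int_scal; [lra | apply conv; auto].
  - apply convex_on_int_scal; [lra | apply conv; auto].
  - apply lipschitz_on_scal, lipschitz_on_add; [exact w_lip | apply sg_lip; apply Rabs_R1].
  - apply lipschitz_on_scal, lipschitz_on_add; [exact w_lip|].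
    apply sg_lip. rewrite Rabs_left by lra. ring.
  - intros x hx. field.
Qed.

(** * Functions that are o(t) at 0+ *)

Definition o_at_0 (u : R -> R) : Prop :=
  forall eps, 0 < eps -> exists eta, 0 < eta /\ forall t, 0 < t < eta -> Rabs (u t) <= eps * t.

Lemma o_at_0_ext u v : (forall t, 0 < t -> u t = v t) -> o_at_0 u -> o_at_0 v.
Proof.
  intros E Hu eps he. destruct (Hu eps he) as (eta & heta & H).
  exists eta. split; [exact heta|]. intros t ht. rewrite <- E by lra. apply H, ht.
Qed.

Lemma o_at_0_le_id u :
  u 0 = 0 -> o_at_0 u -> exists a, 0 < a /\ forall t, 0 <= t <= a -> Rabs (u t) <= t.
Proof.
  intros u0 Hu. destruct (Hu 1 ltac:(lra)) as (eta & heta & H).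
  exists (eta / 2). split; [lra|]. intros t ht. destruct (Req_dec t 0) as [->|ne].
  - rewrite u0, Rabs_R0. lra.
  - pose proof (H t ltac:(lra)). lra.
Qed.

Lemma o_at_0_of_filterlim u l :
  filterlim (fun t => u t / t) (at_right 0) (locally l) -> o_at_0 (fun t => u t - l * t).
Proof.
  intros H eps he. apply filterlim_locally with (eps := mkposreal eps he) in H.
  destruct H as [eta Heta]. exists eta. split; [apply cond_pos|].
  intros t ht. assert (hb : ball 0 eta t).
  { change (Rabs (t - 0) < eta). rewrite Rminus_0_r, Rabs_pos_eq; lra. }
  specialize (Heta t hb ltac:(lra)). change (Rabs (u t / t - l) < eps) in Heta.
  replace (u t - l * t) with ((u t / t - l) * t) by (field; lra).
  rewrite Rabs_mult, (Rabs_pos_eq t) by lra. apply Rmult_le_compat_r; lra.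
Qed.

Lemma filterlim_of_o_at_0 u : o_at_0 u -> filterlim (fun t => u t / t) (at_right 0) (locally 0).
Proof.
  intros H. apply filterlim_locally. intros eps.
  destruct (H (eps / 2) ltac:(destruct eps; simpl; lra)) as (eta & he & Heta).
  exists (mkposreal eta he). intros t ht ht0. change (Rabs (t - 0) < eta) in ht.
  rewrite Rminus_0_r, Rabs_pos_eq in ht by lra.
  change (Rabs (u t / t - 0) < eps). rewrite Rminus_0_r, Rabs_div, (Rabs_pos_eq t) by lra.
  apply Rmult_lt_reg_r with t; [lra|].
  replace (Rabs (u t) / t * t) with (Rabs (u t)) by (field; lra).
  pose proof (Heta t ltac:(simpl in ht; lra)). destruct eps as [e he']; simpl in *. nra.
Qed.

Lemma o_at_0_bound u v1 v2 C b :
  0 < b -> 0 <= C -> o_at_0 v1 -> o_at_0 v2 ->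
  (forall t, 0 < t <= b -> Rabs (u t) <= Rabs (v1 t) + C * Rabs (v2 t)) -> o_at_0 u.
Proof.
  intros hb hC H1 H2 Hu eps he.
  destruct (H1 (eps / 2) ltac:(lra)) as (n1 & hn1 & N1).
  destruct (H2 (eps / (2 * (C + 1))) ltac:(apply Rdiv_lt_0_compat; lra)) as (n2 & hn2 & N2).
  exists (Rmin b (Rmin n1 n2)). split.
  { repeat apply Rmin_glb_lt; lra. }
  intros t ht.
  pose proof (Rmin_l b (Rmin n1 n2)). pose proof (Rmin_r b (Rmin n1 n2)).
  pose proof (Rmin_l n1 n2). pose proof (Rmin_r n1 n2).
  pose proof (Hu t ltac:(lra)). pose proof (N1 t ltac:(lra)). pose proof (N2 t ltac:(lra)).
  assert (C * Rabs (v2 t) <= C * (eps / (2 * (C + 1)) * t)) by (apply Rmult_le_compat_l; lra).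
  assert (C * (eps / (2 * (C + 1)) * t) <= eps / 2 * t).
  { replace (C * (eps / (2 * (C + 1)) * t)) with (C / (C + 1) * (eps / 2 * t)) by (field; lra).
    assert (C / (C + 1) <= 1).
    { apply Rmult_le_reg_r with (C + 1); [lra|].
      replace (C / (C + 1) * (C + 1)) with C by (field; lra). lra. }
    assert (0 <= eps / 2 * t) by nra. nra. }
  lra.
Qed.

Lemma o_at_0_comp u psi K b :
  0 < K -> 0 < b -> (forall x, 0 < x <= b -> 0 < psi x <= K * x) -> o_at_0 u ->
  o_at_0 (fun x => u (psi x)).
Proof.
  intros hK hb Hpsi Hu eps he.
  destruct (Hu (eps / K) ltac:(apply Rdiv_lt_0_compat; lra)) as (n & hn & N).
  exists (Rmin b (n / K)). split; [apply Rmin_glb_lt; [lra | apply Rdiv_lt_0_compat; lra]|].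
  intros x hx. pose proof (Rmin_l b (n / K)). pose proof (Rmin_r b (n / K)).
  destruct (Hpsi x ltac:(lra)) as [h1 h2].
  assert (K * x < n).
  { apply Rmult_lt_reg_r with (/ K); [apply Rinv_0_lt_compat; lra|].
    replace (K * x * / K) with x by (field; lra). unfold Rdiv in *. lra. }
  eapply Rle_trans; [apply N; lra|].
  replace (eps * x) with (eps / K * (K * x)) by (field; lra).
  apply Rmult_le_compat_l; [apply Rlt_le, Rdiv_lt_0_compat; lra | lra].
Qed.

Lemma o_at_0_slope_from_0 phi c e :
  phi 0 = 0 -> o_at_0 (fun t => phi t - c * t) -> 0 < e ->
  exists n, 0 < n /\ forall t, 0 < t < n -> Rabs (slope phi 0 t - c) <= e.
Proof.
  intros phi0 Hphi he. destruct (Hphi e he) as (n & hn & N).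
  exists n. split; [exact hn|]. intros t ht.
  unfold slope. rewrite phi0, !Rminus_0_r.
  replace (phi t / t - c) with ((phi t - c * t) / t) by (field; lra).
  rewrite Rabs_div, (Rabs_pos_eq t) by lra.
  apply Rmult_le_reg_r with t; [lra|].
  replace (Rabs (phi t - c * t) / t * t) with (Rabs (phi t - c * t)) by (field; lra).
  apply N, ht.
Qed.

Lemma dir_deriv2_e1_o_at_0 F c : F (0, 0) = (0, 0) -> dir_deriv2 F (0, 0) (1, 0) (c, 0) ->
  o_at_0 (fun t => fst (F (t, 0)) - c * t) /\ o_at_0 (fun t => snd (F (t, 0))).
Proof.
  intros F0 [H1 H2].
  assert (E : forall t, (fst (0, 0) + t * fst (1, 0), snd (0, 0) + t * snd (1, 0)) = (t, 0))
    by (intros t; simpl; f_equal; ring).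
  split.
  - apply (o_at_0_ext (fun t => fst (F (fst (0, 0) + t * fst (1, 0), snd (0, 0) + t * snd (1, 0)))
                                - fst (F (0, 0)) - c * t)).
    + intros t _. rewrite E, F0. simpl. ring.
    + apply (o_at_0_of_filterlim _ c), H1.
  - apply (o_at_0_ext (fun t => snd (F (fst (0, 0) + t * fst (1, 0), snd (0, 0) + t * snd (1, 0)))
                                - snd (F (0, 0)) - 0 * t)).
    + intros t _. rewrite E, F0. simpl. ring.
    + apply (o_at_0_of_filterlim _ 0), H2.
Qed.

(* Shrink the interval until the slopes of both convex parts are within [c/12] of their right
   derivatives at 0; the slope of [phi] from 0 then pins their difference near [c]. *)
Lemma pinched_DC_near_0 a0 c phi :
  0 < a0 -> 0 < c -> DC_lip_on 0 a0 phi -> phi 0 = 0 -> o_at_0 (fun t => phi t - c * t) ->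
  exists a, 0 < a <= a0 /\ pinched_DC phi a (c / 2) (c / 6).
Proof.
  intros ha0 hc (K1 & K2 & L & hL & C1 & C2 & L1 & L2 & E) phi0 Hphi.
  assert (S1 := convex_on_int_increasing_slopes _ _ _ C1).
  assert (S2 := convex_on_int_increasing_slopes _ _ _ C2).
  set (e1 := c / 12).
  destruct (slopes_pinched_near_0 a0 K1 L ha0 S1 L1 e1 ltac:(unfold e1; lra))
    as (a1 & k1 & ha1 & P1).
  destruct (slopes_pinched_near_0 a0 K2 L ha0 S2 L2 e1 ltac:(unfold e1; lra))
    as (a2 & k2 & ha2 & P2).
  destruct (o_at_0_slope_from_0 phi c e1 phi0 Hphi ltac:(unfold e1; lra)) as (n & hn & N).
  set (a := Rmin a1 a2).
  assert (ha : 0 < a <= a1 /\ a <= a2)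
    by (unfold a; split; [split; [apply Rmin_glb_lt; lra | apply Rmin_l] | apply Rmin_r]).
  set (t0 := Rmin a (n / 2)).
  assert (ht0 : 0 < t0 <= a /\ t0 < n)
    by (unfold t0; pose proof (Rmin_l a (n / 2)); pose proof (Rmin_r a (n / 2));
        split; [split; [apply Rmin_glb_lt; lra | lra] | lra]).
  assert (slope_split : forall s t, 0 <= s -> s < t -> t <= a0 ->
            slope phi s t = slope K1 s t - slope K2 s t).
  { intros s t hs hst ht. unfold slope. rewrite !E by lra. field. lra. }
  pose proof (N t0 ltac:(lra)) as sl0.
  rewrite slope_split in sl0 by lra.
  pose proof (P1 0 t0 ltac:(lra) ltac:(lra) ltac:(lra)).
  pose proof (P2 0 t0 ltac:(lra) ltac:(lra) ltac:(lra)).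
  assert (hk : c - 2 * e1 <= k1 - k2) by (apply Rabs_le_between in sl0; lra).
  assert (sum_pinched : forall s t, 0 <= s -> s < t -> t <= a ->
            k1 + k2 <= slope K1 s t + slope K2 s t <= k1 + k2 + c / 6).
  { intros s t hs hst ht.
    pose proof (P1 s t hs hst ltac:(lra)). pose proof (P2 s t hs hst ltac:(lra)).
    unfold e1 in *. lra. }
  exists a. split; [lra|].
  exists K1, K2, L, (k1 + k2).
  refine (conj hL (conj _ (conj _ (conj _ (conj _ (conj _ (conj _ sum_pinched))))))).
  - apply (convex_on_int_restr 0 a0); auto; lra.
  - apply (convex_on_int_restr 0 a0); auto; lra.
  - apply (lipschitz_on_restr 0 a0); auto; lra.
  - apply (lipschitz_on_restr 0 a0); auto; lra.
  - intros t ht. apply E. lra.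
  - intros s t hs hst ht. rewrite slope_split by lra.
    pose proof (P1 s t hs hst ltac:(lra)). pose proof (P2 s t hs hst ltac:(lra)).
    unfold e1 in *. lra.
Qed.

(** * Continuity and inverses of increasing functions *)

Definition continuous_on_int (a b : R) (f : R -> R) : Prop :=
  forall x, a <= x <= b -> forall eps, 0 < eps -> exists eta, 0 < eta /\
    forall y, a <= y <= b -> Rabs (y - x) < eta -> Rabs (f y - f x) < eps.

Lemma continuous_on_I_int r h : continuous_on_I r h -> continuous_on_int 0 r h.
Proof.
  intros H x hx eps he. specialize (H x hx).
  apply filterlim_locally with (eps := mkposreal eps he) in H.
  destruct H as [eta Heta]. exists eta. split; [apply cond_pos|].
  intros y hy hxy. apply (Heta y hxy hy).
Qed.

Lemma continuous_on_int_I r h : continuous_on_int 0 r h -> continuous_on_I r h.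
Proof.
  intros H x hx. apply filterlim_locally. intros eps.
  destruct (H x hx eps (cond_pos eps)) as (eta & he & Heta).
  exists (mkposreal eta he). intros y hy hy0. apply Heta; auto.
Qed.

Lemma continuous_on_int_restr a b a' b' f :
  a <= a' -> b' <= b -> continuous_on_int a b f -> continuous_on_int a' b' f.
Proof.
  intros h1 h2 H x hx eps he. destruct (H x ltac:(lra) eps he) as (eta & he' & H').
  exists eta. split; [exact he'|]. intros y hy hxy. apply H'; [lra | exact hxy].
Qed.

Lemma lipschitz_continuous_on_int a b f L :
  0 <= L -> lipschitz_on a b f L -> continuous_on_int a b f.
Proof.
  intros hL H x hx eps he. exists (eps / (L + 1)). split; [apply Rdiv_lt_0_compat; lra|].
  intros y hy hxy. pose proof (H y x hy hx).
  assert (L * Rabs (y - x) <= L * (eps / (L + 1))) by (apply Rmult_le_compat_l; lra).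
  assert (L * (eps / (L + 1)) < eps).
  { apply Rmult_lt_reg_r with (L + 1); [lra|].
    replace (L * (eps / (L + 1)) * (L + 1)) with (L * eps) by (field; lra). nra. }
  lra.
Qed.

Lemma continuous_on_int_comp a b u psi :
  continuous_on_int 0 a u -> continuous_on_int 0 b psi ->
  (forall x, 0 <= x <= b -> 0 <= psi x <= a) -> continuous_on_int 0 b (fun x => u (psi x)).
Proof.
  intros Cu Cpsi Hr x hx eps he.
  destruct (Cu (psi x) (Hr x hx) eps he) as (n1 & hn1 & N1).
  destruct (Cpsi x hx n1 hn1) as (n2 & hn2 & N2).
  exists n2. split; [exact hn2|]. intros y hy hxy. apply N1; auto.
Qed.

Lemma continuous_on_int_lipschitz2_comp D Phi L a b v1 v2 :
  0 <= L -> lipschitz2_on D Phi L -> continuous_on_int a b v1 -> continuous_on_int a b v2 ->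
  (forall t, a <= t <= b -> D (v1 t, v2 t)) -> continuous_on_int a b (fun t => Phi (v1 t, v2 t)).
Proof.
  intros hL HL C1 C2 HD x hx eps he.
  set (e' := eps / (2 * (L + 1))).
  assert (he' : 0 < e') by (unfold e'; apply Rdiv_lt_0_compat; lra).
  destruct (C1 x hx e' he') as (n1 & hn1 & N1).
  destruct (C2 x hx e' he') as (n2 & hn2 & N2).
  exists (Rmin n1 n2). split; [apply Rmin_glb_lt; lra|].
  intros y hy hxy. pose proof (Rmin_l n1 n2). pose proof (Rmin_r n1 n2).
  pose proof (N1 y hy ltac:(lra)). pose proof (N2 y hy ltac:(lra)).
  pose proof (HL _ _ (HD y hy) (HD x hx)) as HPhi. simpl in HPhi.
  assert (L * (Rabs (v1 y - v1 x) + Rabs (v2 y - v2 x)) <= L * (2 * e'))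
    by (apply Rmult_le_compat_l; lra).
  assert (L * (2 * e') < eps).
  { unfold e'. apply Rmult_lt_reg_r with (L + 1); [lra|].
    replace (L * (2 * (eps / (2 * (L + 1)))) * (L + 1)) with (L * eps) by (field; lra). nra. }
  lra.
Qed.

Lemma IVT_on_int a phi x :
  0 < a -> continuous_on_int 0 a phi -> phi 0 <= x <= phi a -> exists t, 0 <= t <= a /\ phi t = x.
Proof.
  intros ha HC hx.
  set (f := fun t => phi (clamp 0 a t)).
  assert (Cf : continuity f).
  { intros t0 eps he.
    destruct (HC (clamp 0 a t0) (clamp_in 0 a t0 ltac:(lra)) eps he) as (eta & heta & Heta).
    exists eta. split; [lra|]. intros t [_ ht]. simpl in *. unfold R_dist in *. unfold f.
    apply Heta; [apply clamp_in; lra|].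
    eapply Rle_lt_trans; [apply clamp_lipschitz; lra | exact ht]. }
  assert (f0 : f 0 = phi 0) by (unfold f; rewrite clamp_id; [auto | lra]).
  assert (fa : f a = phi a) by (unfold f; rewrite clamp_id; [auto | lra]).
  destruct (IVT_gen f 0 a x Cf) as (t & ht & hft).
  { rewrite f0, fa. unfold Rmin, Rmax; repeat destruct Rle_dec; lra. }
  exists (clamp 0 a t). split; [apply clamp_in; lra | exact hft].
Qed.

(* Outside [0, b] the argument is clamped, which makes the inverse globally Lipschitz. *)
Definition inverse_on (phi : R -> R) (a b x : R) : R :=
  epsilon (inhabits 0) (fun t => 0 <= t <= a /\ phi t = clamp 0 b x).

Section Increasing_inverse.
Local Set Default Proof Using "All".
Variables (phi : R -> R) (a m b : R).
Hypotheses (ha : 0 < a) (hm : 0 < m) (hb : 0 <= b <= m * a) (phi0 : phi 0 = 0)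
  (Cphi : continuous_on_int 0 a phi)
  (Hinc : increasing_rate_on phi a m).

Let psi := inverse_on phi a b.

Lemma inverse_on_spec x : 0 <= psi x <= a /\ phi (psi x) = clamp 0 b x.
Proof.
  apply (epsilon_spec (inhabits 0) (fun t => 0 <= t <= a /\ phi t = clamp 0 b x)).
  apply IVT_on_int; auto. pose proof (clamp_in 0 b x ltac:(lra)).
  pose proof (Hinc 0 a ltac:(lra) ha ltac:(lra)). lra.
Qed.

Lemma inverse_on_range x : 0 <= psi x <= a.
Proof. apply inverse_on_spec. Qed.

Lemma inverse_on_right_inv x : 0 <= x <= b -> phi (psi x) = x.
Proof. intros hx. rewrite (proj2 (inverse_on_spec x)). apply clamp_id; exact hx. Qed.

Lemma increasing_rate_dist s t :
  0 <= s <= a -> 0 <= t <= a -> m * Rabs (t - s) <= Rabs (phi t - phi s).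
Proof.
  intros hs ht. destruct (Rtotal_order s t) as [h|[<-|h]].
  - pose proof (Hinc s t ltac:(lra) h ltac:(lra)).
    rewrite !Rabs_pos_eq by nra. lra.
  - rewrite !Rminus_diag, Rabs_R0. lra.
  - pose proof (Hinc t s ltac:(lra) h ltac:(lra)).
    rewrite !Rabs_left by nra. lra.
Qed.

Lemma inverse_on_lipschitz x y : Rabs (psi x - psi y) <= / m * Rabs (x - y).
Proof.
  destruct (inverse_on_spec x) as [h1 e1]. destruct (inverse_on_spec y) as [h2 e2].
  pose proof (increasing_rate_dist (psi y) (psi x) h2 h1) as H. rewrite e1, e2 in H.
  pose proof (clamp_lipschitz 0 b x y ltac:(lra)).
  apply Rmult_le_reg_l with m; [exact hm|].
  replace (m * (/ m * Rabs (x - y))) with (Rabs (x - y)) by (field; lra). lra.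
Qed.

Lemma increasing_rate_nonneg t : 0 <= t <= a -> 0 <= phi t.
Proof.
  intros ht. destruct (Req_dec t 0) as [->|ne]; [lra|].
  pose proof (Hinc 0 t ltac:(lra) ltac:(lra) ltac:(lra)). nra.
Qed.

Lemma inverse_on_left_inv t : 0 <= t <= a -> phi t <= b -> psi (phi t) = t.
Proof.
  intros ht hpt. pose proof (increasing_rate_nonneg t ht) as hnn.
  destruct (inverse_on_spec (phi t)) as [h1 e1]. rewrite clamp_id in e1 by lra.
  pose proof (increasing_rate_dist t (psi (phi t)) ht h1) as H.
  rewrite e1, Rminus_diag, Rabs_R0 in H.
  assert (H0 : Rabs (psi (phi t) - t) <= 0) by (apply Rmult_le_reg_l with m; lra).
  pose proof (Rabs_pos (psi (phi t) - t)).
  assert (Rabs (psi (phi t) - t) = 0) as E0 by lra. apply Rabs_eq_0 in E0. lra.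
Qed.

Lemma inverse_on_0 : psi 0 = 0.
Proof.
  pose proof (inverse_on_left_inv 0 ltac:(lra) ltac:(lra)) as H. rewrite phi0 in H. exact H.
Qed.

Lemma inverse_on_le x : 0 <= x <= b -> psi x <= / m * x.
Proof.
  intros hx. pose proof (inverse_on_lipschitz x 0) as L0.
  rewrite inverse_on_0, !Rminus_0_r, !Rabs_pos_eq in L0 by (try lra; apply inverse_on_range).
  exact L0.
Qed.

Lemma inverse_on_pos x : 0 < x <= b -> 0 < psi x.
Proof.
  intros hx. destruct (inverse_on_range x) as [h _]. destruct h as [h | h]; [exact h|].
  pose proof (inverse_on_right_inv x ltac:(lra)) as e. rewrite <- h, phi0 in e. lra.
Qed.

End Increasing_inverse.

Lemma continuous_on_int_sub a b f g :
  continuous_on_int a b f -> continuous_on_int a b g -> continuous_on_int a b (fun x => f x - g x).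
Proof.
  intros Cf Cg x hx eps he.
  destruct (Cf x hx (eps / 2) ltac:(lra)) as (n1 & hn1 & N1).
  destruct (Cg x hx (eps / 2) ltac:(lra)) as (n2 & hn2 & N2).
  exists (Rmin n1 n2). split; [apply Rmin_glb_lt; lra|].
  intros y hy hxy. pose proof (Rmin_l n1 n2). pose proof (Rmin_r n1 n2).
  pose proof (N1 y hy ltac:(lra)). pose proof (N2 y hy ltac:(lra)).
  replace (f y - g y - (f x - g x)) with ((f y - f x) - (g y - g x)) by ring.
  eapply Rle_lt_trans; [apply Rabs_triang|]. rewrite Rabs_Ropp. lra.
Qed.

(* Continuity carries the property past the supremum of the points where it holds. *)
Lemma right_locally_nondecreasing_le s t Psi :
  s < t -> continuous_on_int s t Psi ->
  (forall tau, s <= tau < t -> exists eta, 0 < eta /\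
     forall tau', tau < tau' < tau + eta -> tau' <= t -> Psi tau <= Psi tau') ->
  Psi s <= Psi t.
Proof.
  intros hst HC HR.
  set (E := fun tau => s <= tau <= t /\ Psi s <= Psi tau).
  assert (hb : bound E) by (exists t; intros v [hv _]; lra).
  assert (hne : exists v, E v) by (exists s; split; lra).
  destruct (completeness E hb hne) as [sg [hub hlub]].
  assert (hs : s <= sg) by (apply hub; split; lra).
  assert (ht : sg <= t) by (apply hlub; intros v [hv _]; lra).
  assert (hP : Psi s <= Psi sg).
  { apply Rnot_lt_le. intros hlt.
    destruct (HC sg ltac:(lra) (Psi s - Psi sg) ltac:(lra)) as (eta & heta & Heta).
    assert (near : exists v, E v /\ sg - eta / 2 < v).
    { apply NNPP; intros Hn. assert (hu : is_upper_bound E (sg - eta / 2)).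
      { intros v hv. apply Rnot_lt_le. intros hv2. apply Hn. exists v; auto. }
      apply hlub in hu. lra. }
    destruct near as (v & [hv1 hv2] & hv3). assert (v <= sg) by (apply hub; split; auto).
    pose proof (Heta v hv1 ltac:(rewrite Rabs_left1; lra)) as Hv.
    apply Rabs_lt_between in Hv. lra. }
  destruct (Req_dec sg t) as [<-|ne]; [exact hP|].
  destruct (HR sg ltac:(lra)) as (eta & heta & Heta).
  set (v := Rmin (sg + eta / 2) t).
  assert (hv : sg < v <= t /\ v <= sg + eta / 2)
    by (unfold v; split; [split; [apply Rmin_glb_lt; lra | apply Rmin_r] | apply Rmin_l]).
  pose proof (Heta v ltac:(lra) ltac:(lra)).
  assert (Ev : E v) by (split; lra). apply hub in Ev. lra.
Qed.

Lemma exists_small_for_all_lt (k : nat) (P : nat -> R -> Prop) :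
  (forall i, (i < k)%nat -> exists a, 0 < a /\ forall a', 0 < a' <= a -> P i a') ->
  exists a, 0 < a /\ forall i, (i < k)%nat -> forall a', 0 < a' <= a -> P i a'.
Proof.
  induction k as [|k IH]; intros H.
  - exists 1. split; [lra|]. intros i hi. lia.
  - destruct IH as (a1 & ha1 & H1); [intros i hi; apply H; lia|].
    destruct (H k ltac:(lia)) as (a2 & ha2 & H2).
    exists (Rmin a1 a2). split; [apply Rmin_glb_lt; lra|].
    intros i hi a' ha'. pose proof (Rmin_l a1 a2). pose proof (Rmin_r a1 a2).
    destruct (Nat.eq_dec i k) as [->|ne]; [apply H2; lra | apply H1; [lia | lra]].
Qed.

Section Pieces.
Variables (a : R) (k : nat) (fs : nat -> R -> R) (h : R -> R).
Hypotheses (Hcov : forall t, 0 <= t <= a -> exists i, (i < k)%nat /\ h t = fs i t)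
  (Cfs : forall i, (i < k)%nat -> continuous_on_int 0 a (fs i)) (Ch : continuous_on_int 0 a h).

Lemma pieces_through_nearby_points tau : 0 <= tau <= a ->
  exists eta, 0 < eta /\ forall j tau', (j < k)%nat -> 0 <= tau' <= a -> Rabs (tau' - tau) < eta ->
    h tau' = fs j tau' -> h tau = fs j tau.
Proof.
  intros htau.
  destruct (exists_small_for_all_lt k (fun j eta => fs j tau = h tau \/
     forall tau', 0 <= tau' <= a -> Rabs (tau' - tau) < eta -> fs j tau' <> h tau'))
    as (eta & heta & HU).
  { intros j hj. destruct (Req_dec (fs j tau) (h tau)) as [e|ne].
    - exists 1. split; [lra|]. intros; left; exact e.
    - set (dd := Rabs (fs j tau - h tau)).
      assert (hd : 0 < dd) by (apply Rabs_pos_lt; lra).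
      destruct (Cfs j hj tau htau (dd / 2) ltac:(lra)) as (e1 & he1 & H1).
      destruct (Ch tau htau (dd / 2) ltac:(lra)) as (e2 & he2 & H2).
      exists (Rmin e1 e2). split; [apply Rmin_glb_lt; lra|].
      intros eta' heta'. right. intros tau' htau' hd' Heq.
      pose proof (Rmin_l e1 e2). pose proof (Rmin_r e1 e2).
      pose proof (H1 tau' htau' ltac:(lra)) as A. pose proof (H2 tau' htau' ltac:(lra)) as B.
      rewrite Heq in A. unfold dd in *. split_Rabs; lra. }
  exists eta. split; [exact heta|]. intros j tau' hj htau' hd Heq.
  destruct (HU j hj eta ltac:(lra)) as [e|e]; [auto|].
  exfalso. apply (e tau' htau' hd). auto.
Qed.

(* [h] can only follow pieces passing through [(tau, h tau)], so [Phi t (h t) - m t] is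
   nondecreasing to the right of every point. *)
Lemma increasing_rate_of_pieces m (Phi : R -> R -> R) :
  0 < a -> continuous_on_int 0 a (fun t => Phi t (h t)) ->
  (forall i, (i < k)%nat -> increasing_rate_on (fun t => Phi t (fs i t)) a m) ->
  increasing_rate_on (fun t => Phi t (h t)) a m.
Proof.
  intros ha CP Hm s t hs hst ht.
  set (Psi := fun tau => Phi tau (h tau) - m * tau).
  assert (CPsi : continuous_on_int s t Psi).
  { apply (continuous_on_int_restr 0 a); [lra | lra|].
    apply continuous_on_int_sub; [exact CP|].
    apply (lipschitz_continuous_on_int 0 a _ (Rabs m)); [apply Rabs_pos|].
    intros x y _ _. rewrite <- Rmult_minus_distr_l, Rabs_mult. lra. }
  enough (Psi s <= Psi t) by (unfold Psi in *; lra).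
  apply right_locally_nondecreasing_le; [exact hst | exact CPsi|].
  intros tau htau.
  destruct (pieces_through_nearby_points tau ltac:(lra)) as (eta & heta & Heta).
  exists eta. split; [exact heta|]. intros tau' htau' ht'.
  destruct (Hcov tau' ltac:(lra)) as (j & hj & ej).
  pose proof (Heta j tau' hj ltac:(lra) ltac:(rewrite Rabs_pos_eq; lra) ej) as e.
  pose proof (Hm j hj tau tau' ltac:(lra) ltac:(lra) ltac:(lra)).
  unfold Psi. rewrite ej, e. lra.
Qed.

End Pieces.

(** * Closed sets in the plane *)

Lemma closed_or (A B : pt2 -> Prop) : closed A -> closed B -> closed (fun x => A x \/ B x).
Proof.
  intros hA hB x Hx. destruct (classic (A x)) as [a|na]; [left; exact a|].
  destruct (classic (B x)) as [b|nb]; [right; exact b|]. exfalso. apply Hx.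
  assert (lA : locally x (fun y => ~ A y)) by (apply NNPP; intros h; apply na, hA, h).
  assert (lB : locally x (fun y => ~ B y)) by (apply NNPP; intros h; apply nb, hB, h).
  generalize (filter_and _ _ lA lB). apply filter_imp. intros y [h1 h2] [h|h]; auto.
Qed.

Lemma closed_finite_union (k : nat) (C : nat -> pt2 -> Prop) :
  (forall i, (i < k)%nat -> closed (C i)) -> closed (fun x => exists i, (i < k)%nat /\ C i x).
Proof.
  induction k as [|k IH]; intros H.
  - eapply closed_ext; [|apply closed_false]. intros x; split; [tauto | intros (i & hi & _); lia].
  - eapply closed_ext;
      [|apply (closed_or _ _ (IH ltac:(intros; apply H; lia)) (H k ltac:(lia)))].
    intros x; split.
    + intros [(i & hi & hc)|hc]; [exists i; split; [lia | exact hc] | exists k; auto].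
    + intros (i & hi & hc). destruct (Nat.eq_dec i k) as [->|ne]; [right; exact hc|].
      left. exists i. split; [lia | exact hc].
Qed.

Lemma lipschitz_continuous (f : R -> R) K :
  0 <= K -> (forall x y, Rabs (f x - f y) <= K * Rabs (x - y)) -> forall x, continuous f x.
Proof.
  intros hK H x. apply filterlim_locally. intros eps.
  assert (hd : 0 < eps / (K + 1)) by (apply Rdiv_lt_0_compat; [apply cond_pos | lra]).
  exists (mkposreal _ hd). intros y hy. change (Rabs (y - x) < eps / (K + 1)) in hy.
  change (Rabs (f y - f x) < eps). pose proof (cond_pos eps).
  assert (K * Rabs (y - x) <= K * (eps / (K + 1))) by (apply Rmult_le_compat_l; lra).
  assert (K * (eps / (K + 1)) < eps).
  { apply Rmult_lt_reg_r with (K + 1); [lra|].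
    replace (K * (eps / (K + 1)) * (K + 1)) with (K * eps) by (field; lra). nra. }
  pose proof (H y x). lra.
Qed.

Lemma closed_graph_piece (S : pt2 -> Prop) b (Gf v1 v2 : R -> R) :
  closed S -> (forall x, continuous Gf x) -> (forall x, continuous v1 x) ->
  (forall x, continuous v2 x) ->
  closed (fun q : pt2 => (0 <= fst q <= b) /\ snd q = Gf (fst q) /\ S (v1 (fst q), v2 (fst q))).
Proof.
  intros HS CG C1 C2.
  assert (Cfst : forall q : pt2, continuous (fun p : pt2 => fst p) q)
    by (intros [x y]; apply continuous_fst).
  apply (closed_ext (fun q : pt2 => (0 <= fst q /\ fst q <= b) /\ snd q - Gf (fst q) = 0 /\
                                   S (v1 (fst q), v2 (fst q)))).
  { intros q. split; intros (h1 & h2 & h3); (split; [exact h1 | split; [lra | exact h3]]). }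
  apply closed_and; [apply closed_and | apply closed_and].
  - apply (closed_comp (fun q : pt2 => fst q) (fun x => 0 <= x)); [exact Cfst | apply closed_ge].
  - apply (closed_comp (fun q : pt2 => fst q) (fun x => x <= b)); [exact Cfst | apply closed_le].
  - apply (closed_comp (fun q : pt2 => snd q - Gf (fst q)) (fun x => x = 0)); [|apply closed_eq].
    intros [x y]. apply (continuous_minus (fun p : pt2 => snd p) (fun p => Gf (fst p))).
    + apply continuous_snd.
    + apply continuous_comp; [apply continuous_fst | apply CG].
  - apply (closed_comp (fun q : pt2 => (v1 (fst q), v2 (fst q))) S); [|exact HS].
    intros q. apply (continuous_comp_2 (fun p : pt2 => v1 (fst p)) (fun p => v2 (fst p)) pair).
    + apply continuous_comp; [apply Cfst | apply C1].
    + apply continuous_comp; [apply Cfst | apply C2].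
    + apply filterlim_ext with (fun p => p); [intros [x y]; reflexivity | apply filterlim_id].
Qed.

(** * The image of an (s)-set *)

Section Image_near_0.
Local Set Default Proof Using "All".
Variables (c dl L : R) (F : pt2 -> pt2).
Hypotheses (hc : 0 < c) (hdl : 0 < dl) (hL : 0 <= L)
  (DF1 : DC_lip2_on (square dl) (fun p => fst (F p)) L)
  (DF2 : DC_lip2_on (square dl) (fun p => snd (F p)) L)
  (F0 : F (0, 0) = (0, 0))
  (HF1 : o_at_0 (fun t => fst (F (t, 0)) - c * t))
  (HF2 : o_at_0 (fun t => snd (F (t, 0)))).

Let LF1 := DC_lip2_on_lipschitz _ _ _ DF1.
Let LF2 := DC_lip2_on_lipschitz _ _ _ DF2.

Lemma curve_pinched_near_0 a0 u :
  0 < a0 -> DC_lip_on 0 a0 u -> u 0 = 0 -> o_at_0 u ->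
  (forall t, 0 <= t <= a0 -> square dl (t, u t)) ->
  exists a, 0 < a <= a0 /\ pinched_DC (fun t => fst (F (t, u t))) a (c / 2) (c / 6).
Proof.
  intros ha0 Du u0 Hu HDu.
  apply pinched_DC_near_0; auto.
  - apply (DC_lip_on_comp (square dl) (fun p => fst (F p)) L 0 a0 (fun t => t) u);
      auto using square_convex, DC_lip_on_id.
  - rewrite u0, F0. reflexivity.
  - apply (o_at_0_bound _ (fun t => fst (F (t, 0)) - c * t) u (2 * L) a0); auto; [lra|].
    intros t ht.
    pose proof (lipschitz2_on_vertical _ _ _ t (u t) 0 LF1 (HDu t ltac:(lra))
                  (square_axis dl t (u t) (HDu t ltac:(lra)))) as V.
    rewrite Rminus_0_r in V.
    replace (fst (F (t, u t)) - c * t)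
      with ((fst (F (t, 0)) - c * t) + (fst (F (t, u t)) - fst (F (t, 0)))) by ring.
    eapply Rle_trans; [apply Rabs_triang | lra].
Qed.

Section Curve.
Variables (a : R) (u : R -> R).
Hypotheses (ha : 0 < a) (u0 : u 0 = 0) (Cu : continuous_on_int 0 a u)
  (HDu : forall t, 0 <= t <= a -> square dl (t, u t))
  (Hrate : increasing_rate_on (fun t => fst (F (t, u t))) a (c / 2)).

Definition curve_inverse : R -> R := inverse_on (fun t => fst (F (t, u t))) a (c / 2 * a).

Definition curve_image (x : R) : R := snd (F (curve_inverse x, u (curve_inverse x))).

Let hm : 0 < c / 2.
Proof. lra. Qed.

Let hb : 0 <= c / 2 * a <= c / 2 * a.
Proof. split; [nra | lra]. Qed.

Let phi0 : fst (F (0, u 0)) = 0.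
Proof. rewrite u0, F0. reflexivity. Qed.

Let Cphi : continuous_on_int 0 a (fun t => fst (F (t, u t))).
Proof.
  apply (continuous_on_int_lipschitz2_comp (square dl) (fun p => fst (F p)) (2 * L) 0 a
           (fun t => t) u); auto; [lra|].
  apply (lipschitz_continuous_on_int _ _ _ 1); [lra|]. intros x y _ _. lra.
Qed.

Lemma curve_inverse_range x : 0 <= curve_inverse x <= a.
Proof. apply (inverse_on_range _ _ _ _ ha hm hb phi0 Cphi Hrate). Qed.

Lemma curve_inverse_lipschitz x y :
  Rabs (curve_inverse x - curve_inverse y) <= / (c / 2) * Rabs (x - y).
Proof. apply (inverse_on_lipschitz _ _ _ _ ha hm hb phi0 Cphi Hrate). Qed.

Lemma curve_image_iff (X : R -> Prop) q :
  (exists t, 0 <= t <= a /\ X t /\ F (t, u t) = q /\ fst q <= c / 2 * a) <->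
  (0 <= fst q <= c / 2 * a /\ snd q = curve_image (fst q) /\ X (curve_inverse (fst q))).
Proof.
  split.
  - intros (t & ht & hX & <- & hq).
    pose proof (increasing_rate_nonneg _ _ _ _ ha hm hb phi0 Cphi Hrate t ht).
    pose proof (inverse_on_left_inv _ _ _ _ ha hm hb phi0 Cphi Hrate t ht hq) as e.
    unfold curve_image, curve_inverse. rewrite e. auto.
  - intros (hq & e & hX). exists (curve_inverse (fst q)).
    split; [apply curve_inverse_range|]. split; [exact hX|]. split; [|lra].
    apply injective_projections; [|exact (eq_sym e)].
    apply (inverse_on_right_inv _ _ _ _ ha hm hb phi0 Cphi Hrate _ hq).
Qed.

Lemma curve_image_continuous : continuous_on_I (c / 2 * a) curve_image.
Proof.
  apply continuous_on_int_I.
  assert (Cpsi : continuous_on_int 0 (c / 2 * a) curve_inverse).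
  { apply lipschitz_continuous_on_int with (/ (c / 2)).
    - left. apply Rinv_0_lt_compat. exact hm.
    - intros x y _ _. apply curve_inverse_lipschitz. }
  apply (continuous_on_int_lipschitz2_comp (square dl) (fun p => snd (F p)) (2 * L));
    auto; [lra | |].
  - apply (continuous_on_int_comp a); auto. intros x _. apply curve_inverse_range.
  - intros x _. apply HDu, curve_inverse_range.
Qed.

Lemma curve_maps_continuous (Lu : R) :
  0 <= Lu -> lipschitz_on 0 a u Lu ->
  (forall x, continuous curve_inverse x) /\
  (forall x, continuous (fun x => u (curve_inverse x)) x) /\
  (forall x, continuous curve_image x).
Proof.
  intros hLu Lipu.
  assert (hK : 0 <= / (c / 2)) by (left; apply Rinv_0_lt_compat; exact hm).
  assert (Lv : forall x y, Rabs (u (curve_inverse x) - u (curve_inverse y))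
                           <= Lu * / (c / 2) * Rabs (x - y)).
  { intros x y. eapply Rle_trans; [apply Lipu; apply curve_inverse_range|].
    rewrite Rmult_assoc. apply Rmult_le_compat_l; [exact hLu | apply curve_inverse_lipschitz]. }
  split; [|split].
  - apply (lipschitz_continuous _ _ hK curve_inverse_lipschitz).
  - apply (lipschitz_continuous _ (Lu * / (c / 2))); [apply Rmult_le_pos; auto | exact Lv].
  - apply (lipschitz_continuous _ (2 * L * (/ (c / 2) + Lu * / (c / 2)))).
    { apply Rmult_le_pos; [lra|]. pose proof (Rmult_le_pos _ _ hLu hK). lra. }
    intros x y. unfold curve_image.
    eapply Rle_trans; [apply LF2; apply HDu, curve_inverse_range|]. simpl.
    rewrite (Rmult_assoc (2 * L)). apply Rmult_le_compat_l; [lra|].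
    pose proof (curve_inverse_lipschitz x y). pose proof (Lv x y). lra.
Qed.

Lemma curve_image_DCR :
  DC_lip_on 0 a u -> pinched_DC (fun t => fst (F (t, u t))) a (c / 2) (c / 6) ->
  DCR_on (c / 2 * a) curve_image.
Proof.
  intros Du Hp. apply DC_lip_on_DCR; [lra|].
  assert (Dpsi : DC_lip_on 0 (c / 2 * a) curve_inverse).
  { apply (pinched_DC_inverse a _ (c / 2) (c / 6) (fun t => fst (F (t, u t)))); auto; [lra|].
    intros x hx. split; [apply curve_inverse_range|].
    apply (inverse_on_right_inv _ _ _ _ ha hm hb phi0 Cphi Hrate _ hx). }
  apply (DC_lip_on_comp (square dl) (fun p => snd (F p)) L); auto using square_convex.
  - apply (DC_lip_on_comp_1D a); auto. intros x _. apply curve_inverse_range.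
  - intros x _. apply HDu, curve_inverse_range.
Qed.

Lemma curve_image_0 : curve_image 0 = 0.
Proof.
  unfold curve_image, curve_inverse.
  rewrite (inverse_on_0 _ _ _ _ ha hm hb phi0 Cphi Hrate), u0, F0. reflexivity.
Qed.

Lemma curve_image_deriv_0 :
  o_at_0 u -> filterlim (fun t => (curve_image t - curve_image 0) / t) (at_right 0) (locally 0).
Proof.
  intros Hu. rewrite curve_image_0.
  apply filterlim_ext with (fun t => curve_image t / t);
    [intros t; rewrite Rminus_0_r; reflexivity|].
  apply filterlim_of_o_at_0.
  assert (Hpsi : forall x, 0 < x <= c / 2 * a -> 0 < curve_inverse x <= / (c / 2) * x).
  { intros x hx. split.
    - apply (inverse_on_pos _ _ _ _ ha hm hb phi0 Cphi Hrate _ hx).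
    - apply (inverse_on_le _ _ _ _ ha hm hb phi0 Cphi Hrate x ltac:(lra)). }
  assert (hK : 0 < / (c / 2)) by (apply Rinv_0_lt_compat; exact hm).
  apply (o_at_0_bound _ (fun x => snd (F (curve_inverse x, 0))) (fun x => u (curve_inverse x))
           (2 * L) (c / 2 * a)); [nra | lra | | |].
  - apply (o_at_0_comp (fun t => snd (F (t, 0))) curve_inverse (/ (c / 2)) (c / 2 * a)); auto; nra.
  - apply (o_at_0_comp u curve_inverse (/ (c / 2)) (c / 2 * a)); auto; nra.
  - intros x _. unfold curve_image.
    pose proof (HDu (curve_inverse x) (curve_inverse_range x)) as Hx.
    pose proof (lipschitz2_on_vertical _ _ _ _ _ _ LF2 Hx (square_axis _ _ _ Hx)) as V.
    rewrite Rminus_0_r in V.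
    replace (snd (F (curve_inverse x, u (curve_inverse x))))
      with (snd (F (curve_inverse x, 0))
            + (snd (F (curve_inverse x, u (curve_inverse x))) - snd (F (curve_inverse x, 0))))
      by ring.
    eapply Rle_trans; [apply Rabs_triang | lra].
Qed.

End Curve.

Section S_set_image.
Variables (S : pt2 -> Prop) (r a : R) (k : nat) (f : nat -> R -> R) (H : (R -> R) -> Prop).
Hypotheses (ha : 0 < a) (har : a <= r) (ClS : closed S)
  (Hf : forall i, (i < k)%nat -> DC_lip_on 0 a (f i) /\ f i 0 = 0 /\ o_at_0 (f i) /\
          (forall t, 0 <= t <= a -> square dl (t, f i t)) /\
          pinched_DC (fun t => fst (F (t, f i t))) a (c / 2) (c / 6))
  (Hcov : forall p, S p -> exists i, (i < k)%nat /\ graph_on r (f i) p)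
  (HC : forall h, H h -> continuous_on_I r h)
  (HSH : forall p, S p <-> exists h, H h /\ graph_on r h p).

Let b := c / 2 * a.

Let Sst := fun q => (exists p, S p /\ fst p <= a /\ F p = q) /\ fst q <= b.

Lemma piece_continuous i : (i < k)%nat -> continuous_on_int 0 a (f i).
Proof.
  intros hi. destruct (DC_lip_on_lipschitz _ _ _ (proj1 (Hf i hi))) as (Lf & hLf & LLf).
  exact (lipschitz_continuous_on_int _ _ _ _ hLf LLf).
Qed.

Lemma piece_rate i : (i < k)%nat -> increasing_rate_on (fun t => fst (F (t, f i t))) a (c / 2).
Proof. intros hi. apply (pinched_DC_increasing _ _ _ (c / 6)). apply Hf, hi. Qed.

Lemma curve_follows_pieces h : H h -> forall t, 0 <= t <= a -> exists i, (i < k)%nat /\ h t = f i t.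
Proof.
  intros Hh t ht.
  assert (St : S (t, h t)) by (apply HSH; exists h; split; [exact Hh | split; simpl; lra]).
  destruct (Hcov _ St) as (i & hi & [_ e]). exists i. split; [exact hi | exact e].
Qed.

Lemma S_curve_props h : H h ->
  h 0 = 0 /\ continuous_on_int 0 a h /\ (forall t, 0 <= t <= a -> square dl (t, h t)) /\
  increasing_rate_on (fun t => fst (F (t, h t))) a (c / 2).
Proof.
  intros Hh.
  assert (Ch : continuous_on_int 0 a h)
    by (apply (continuous_on_int_restr 0 r); [lra | lra | apply continuous_on_I_int, HC, Hh]).
  assert (HD : forall t, 0 <= t <= a -> square dl (t, h t)).
  { intros t ht. destruct (curve_follows_pieces h Hh t ht) as (i & hi & ->). apply Hf; auto. }
  split; [|split; [exact Ch | split; [exact HD|]]].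
  - destruct (curve_follows_pieces h Hh 0 ltac:(lra)) as (i & hi & ->). apply Hf, hi.
  - apply (increasing_rate_of_pieces a k f h (curve_follows_pieces h Hh) piece_continuous Ch
             (c / 2) (fun t y => fst (F (t, y))) ha); [|exact piece_rate].
    apply (continuous_on_int_lipschitz2_comp (square dl) (fun p => fst (F p)) (2 * L) 0 a
             (fun t => t) h); auto; [lra|].
    apply (lipschitz_continuous_on_int _ _ _ 1); [lra|]. intros x y _ _. lra.
Qed.

Lemma image_as_piece_graphs q : Sst q <-> exists i, (i < k)%nat /\
  (0 <= fst q <= b /\ snd q = curve_image a (f i) (fst q) /\
   S (curve_inverse a (f i) (fst q), f i (curve_inverse a (f i) (fst q)))).
Proof.
  assert (Sst q <-> exists i, (i < k)%nat /\
            exists t, 0 <= t <= a /\ S (t, f i t) /\ F (t, f i t) = q /\ fst q <= b) as ->.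
  { split.
    - intros ((p & Sp & hp & <-) & hq). destruct (Hcov p Sp) as (i & hi & [hp1 hp2]).
      exists i. split; [exact hi|]. exists (fst p). split; [lra|].
      rewrite <- hp2, <- surjective_pairing. auto.
    - intros (i & hi & t & ht & St & <- & hq). split; [|exact hq].
      exists (t, f i t). simpl. split; [exact St | split; [lra | reflexivity]]. }
  assert (Hi : forall i, (i < k)%nat -> forall q,
            (exists t, 0 <= t <= a /\ S (t, f i t) /\ F (t, f i t) = q /\ fst q <= b) <->
            (0 <= fst q <= b /\ snd q = curve_image a (f i) (fst q) /\
             S (curve_inverse a (f i) (fst q), f i (curve_inverse a (f i) (fst q))))).
  { intros i hi. destruct (Hf i hi) as (_ & f0 & _ & HD & _).
    exact (curve_image_iff a (f i) ha f0 (piece_continuous i hi) HD (piece_rate i hi)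
             (fun t => S (t, f i t))). }
  split; intros (i & hi & Hq); exists i; split; auto; apply (Hi i hi); exact Hq.
Qed.

Lemma image_as_curve_graphs q : Sst q <->
  exists g, (exists h, H h /\ g = curve_image a h) /\ graph_on b g q.
Proof.
  assert (Sst q <-> exists h, H h /\
            exists t, 0 <= t <= a /\ True /\ F (t, h t) = q /\ fst q <= b) as ->.
  { split.
    - intros ((p & Sp & hp & <-) & hq). destruct (proj1 (HSH p) Sp) as (h & Hh & [hp1 hp2]).
      exists h. split; [exact Hh|]. exists (fst p). split; [lra|].
      rewrite <- hp2, <- surjective_pairing. auto.
    - intros (h & Hh & t & ht & _ & <- & hq). split; [|exact hq].
      exists (t, h t). simpl. split; [|split; [lra | reflexivity]].
      apply HSH. exists h. split; [exact Hh | split; simpl; lra]. }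
  split.
  - intros (h & Hh & Hq). destruct (S_curve_props h Hh) as (h0 & Ch & HD & Hr).
    apply (curve_image_iff a h ha h0 Ch HD Hr (fun _ => True)) in Hq.
    destruct Hq as (hq & e & _). exists (curve_image a h). split; [exists h; auto|].
    split; [exact hq | exact e].
  - intros (g & (h & Hh & ->) & [hq e]). exists h. split; [exact Hh|].
    destruct (S_curve_props h Hh) as (h0 & Ch & HD & Hr).
    apply (curve_image_iff a h ha h0 Ch HD Hr (fun _ => True)). auto.
Qed.

Lemma image_closed : closed Sst.
Proof.
  apply (closed_ext _ _ (fun q => iff_sym (image_as_piece_graphs q))).
  apply closed_finite_union. intros i hi.
  destruct (Hf i hi) as (Df & f0 & _ & HD & _).
  destruct (DC_lip_on_lipschitz _ _ _ Df) as (Lf & hLf & LLf).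
  destruct (curve_maps_continuous a (f i) ha f0 (piece_continuous i hi) HD (piece_rate i hi)
              Lf hLf LLf) as (C1 & C2 & C3).
  exact (closed_graph_piece S b _ _ (fun x => f i (curve_inverse a (f i) x)) ClS C3 C1 C2).
Qed.

Lemma s_set_image : (exists p, S p) -> s_set Sst.
Proof.
  intros (p0 & Sp0).
  assert (hb : 0 < b) by (unfold b; nra).
  split; [|split; [exact image_closed|]].
  - destruct (proj1 (HSH p0) Sp0) as (h & Hh & _).
    destruct (S_curve_props h Hh) as (h0 & _).
    assert (S0 : S (0, h 0)) by (apply HSH; exists h; split; [exact Hh | split; simpl; lra]).
    rewrite h0 in S0.
    exists (0, 0). split; [|simpl; lra].
    exists (0, 0). split; [exact S0 | simpl; split; [lra | exact F0]].
  - exists b. split; [exact hb|]. split.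
    + exists k, (fun i => curve_image a (f i)). split.
      * intros i hi. destruct (Hf i hi) as (Df & f0 & of & HD & Hp).
        pose proof (piece_continuous i hi) as Cf. pose proof (piece_rate i hi) as Hr.
        split; [apply (curve_image_DCR a (f i) ha f0 Cf HD Hr Df Hp)|].
        split; [apply (curve_image_0 a (f i) ha f0 Cf HD Hr)|].
        apply (curve_image_deriv_0 a (f i) ha f0 Cf HD Hr of).
      * intros q hq. apply image_as_piece_graphs in hq. destruct hq as (i & hi & hq & e & _).
        exists i. split; [exact hi | split; [exact hq | exact e]].
    + exists (fun g => exists h, H h /\ g = curve_image a h). split.
      * intros g (h & Hh & ->). destruct (S_curve_props h Hh) as (h0 & Ch & HD & Hr).
        apply (curve_image_continuous a h ha h0 Ch HD Hr).
      * exact image_as_curve_graphs.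
Qed.

End S_set_image.

Lemma s_set_image_near_0 S : s_set S ->
  exists a b, 0 < a /\ 0 < b /\
    s_set (fun q => (exists p, S p /\ fst p <= a /\ F p = q) /\ fst q <= b).
Proof.
  intros ((p0 & Sp0) & ClS & r & hr & (k & f & Hf & Hcov) & (H & HC & HSH)).
  assert (Hfi : forall i, (i < k)%nat -> DC_lip_on 0 r (f i) /\ f i 0 = 0 /\ o_at_0 (f i)).
  { intros i hi. destruct (Hf i hi) as (DCf & f0 & lim).
    split; [apply DCR_on_DC_lip_on; [lra | exact DCf]|]. split; [exact f0|].
    apply (o_at_0_ext (fun t => f i t - f i 0 - 0 * t)); [intros t _; rewrite f0; ring|].
    apply o_at_0_of_filterlim, lim. }
  destruct (exists_small_for_all_lt k (fun i a => forall t, 0 <= t <= a -> Rabs (f i t) <= t))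
    as (af & haf & Haf).
  { intros i hi. destruct (Hfi i hi) as (_ & f0 & of).
    destruct (o_at_0_le_id (f i) f0 of) as (a & ha & Ha).
    exists a. split; [exact ha|]. intros a' ha' t ht. apply Ha. lra. }
  set (a0 := Rmin r (Rmin dl af)).
  assert (ha0 : 0 < a0 /\ a0 <= r /\ a0 <= dl /\ a0 <= af).
  { unfold a0. pose proof (Rmin_l r (Rmin dl af)). pose proof (Rmin_r r (Rmin dl af)).
    pose proof (Rmin_l dl af). pose proof (Rmin_r dl af).
    split; [repeat apply Rmin_glb_lt; lra | lra]. }
  assert (HD : forall i, (i < k)%nat -> forall t, 0 <= t <= a0 -> square dl (t, f i t)).
  { intros i hi t ht. pose proof (Haf i hi af ltac:(lra) t ltac:(lra)) as B.
    apply Rabs_le_between in B. split; simpl; lra. }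
  destruct (exists_small_for_all_lt k
              (fun i a => pinched_DC (fun t => fst (F (t, f i t))) a (c / 2) (c / 6)))
    as (a1 & ha1 & Ha1).
  { intros i hi. destruct (Hfi i hi) as (DCf & f0 & of).
    assert (DCf0 : DC_lip_on 0 a0 (f i)) by (apply (DC_lip_on_restr 0 r); auto; lra).
    destruct (curve_pinched_near_0 a0 (f i) ltac:(lra) DCf0 f0 of (HD i hi)) as (a & ha & Hp).
    exists a. split; [lra|]. intros a' ha'. apply (pinched_DC_restr _ a); [lra | exact Hp]. }
  set (a := Rmin a1 a0).
  assert (ha : 0 < a <= a1 /\ a <= a0)
    by (unfold a; split; [split; [apply Rmin_glb_lt; lra | apply Rmin_l] | apply Rmin_r]).
  exists a, (c / 2 * a). split; [lra|]. split; [nra|].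
  apply (s_set_image S r a k f H); auto; try lra.
  - intros i hi. destruct (Hfi i hi) as (DCf & f0 & of).
    split; [apply (DC_lip_on_restr 0 r); auto; lra|]. split; [exact f0|]. split; [exact of|].
    split; [intros t ht; apply HD; auto; lra|]. apply Ha1; auto; lra.
  - exists p0. exact Sp0.
Qed.

End Image_near_0.

Theorem lemma5p10 (G : pt2 -> Prop) (c : R) (F : pt2 -> pt2) (S : pt2 -> Prop) :
  open G -> G (0, 0) -> 0 < c ->
  locally_DC G F -> F (0, 0) = (0, 0) ->
  dir_deriv2 F (0, 0) (1, 0) (c, 0) ->
  (forall p, S p -> G p) -> s_set S ->
  exists a b, 0 < a /\ 0 < b /\
    s_set (fun q => (exists p, S p /\ fst p <= a /\ F p = q) /\ fst q <= b).
Proof.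
  intros _ G0 hc HDC F0 Hd _ HS.
  destruct (locally_DC_near_0 G F G0 HDC) as (d & L & hd & hL & DF1 & DF2).
  destruct (dir_deriv2_e1_o_at_0 F c F0 Hd) as [HF1 HF2].
  exact (s_set_image_near_0 c d L F hc hd hL DF1 DF2 F0 HF1 HF2 S HS).
Qed.
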